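(* Let $\mathcal D=[x_{1/2},x_{N_x+1/2}]\times[z_{1/2},z_{N_z+1/2}]$ be partitioned into rectangles $K_{ij}=[x_{i-1/2},x_{i+1/2}]\times[z_{j-1/2},z_{j+1/2}]$, and let $V_h^k$ be the space of functions in $L^2(\mathcal D)$ whose restriction to each $K_{ij}$ is a polynomial of degree at most $k$; $\mathbf V_h^k$ denotes $M$-vectors with entries in $V_h^k$. Let $\mathbf A(\mathbf x)=(a_{kj}(\mathbf x))_{k,j=1}^M$ be a symmetric positive definite matrix function, smooth on each cell (possible discontinuities only along mesh lines), and let $\bar{\mathbf A}$ be the matrix whose $(k,l)$ entry is $\nabla a_{kl}$, so that $(\bar{\mathbf A}\mathbf v)_k=\sum_l v_l\nabla a_{kl}$. Consider the semi-discrete LDG scheme: find $\widehat{\mathbf v}_h(t)\in\mathbf V_h^k$ (twice differentiable in $t$) and $\widehat{\mathbf S}_h(t)\in(\mathbf V_h^k)^2$ (an $M\times 2$ matrix whose columns are in $\mathbf V_h^k$) such that for every cell $K=K_{ij}$ with outward unit normal $\boldsymbol\nu$, $$\int_K \partial_t^2\widehat{\mathbf v}_h\cdot\mathbf p_h\,d\mathbf x+\int_K\mathbf A\widehat{\mathbf S}_h\cdot\nabla\mathbf p_h\,d\mathbf x-\big(\mathbf A^-\widehat{\mathbf S}_h^-\boldsymbol\nu,\mathbf p_h\big)_{\partial K}=0\qquad\forall\mathbf p_h\in\mathbf V_h^k,$$ $$\int_K\widehat{\mathbf S}_h\cdot\mathbf w_h\,d\mathbf x+\int_K\mathbf A\widehat{\mathbf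 v}_h\cdot\operatorname{div}\mathbf w_h\,d\mathbf x+\int_K\bar{\mathbf A}\widehat{\mathbf v}_h\cdot\mathbf w_h\,d\mathbf x-\big(\mathbf A\widehat{\mathbf v}_h^+,\mathbf w_h\boldsymbol\nu\big)_{\partial K}=0\qquad\forall\mathbf w_h\in(\mathbf V_h^k)^2,$$ where in the last boundary term $\mathbf A$ is evaluated from inside $K$, and on each interior edge the superscript $-$ ($+$) denotes the trace from the left/lower (right/upper) neighbouring cell (alternating fluxes), with homogeneous Dirichlet boundary conditions $\widehat{\mathbf v}=0$ on $\partial\mathcal D$. Then the semi-discrete energy $$E_h(t)=\int_{\mathcal D}\Big(\partial_t\widehat{\mathbf v}_h\cdot\partial_t\widehat{\mathbf v}_h+\widehat{\mathbf S}_h\cdot\widehat{\mathbf S}_h\Big)d\mathbf x$$ is conserved by this scheme for all $t>0$, i.e. $\frac{d}{dt}E_h(t)=0$.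
   Context: The scheme discretizes the stochastic Galerkin (generalized polynomial chaos) system $\partial_t^2\widehat{\mathbf v}=\operatorname{div}(\mathbf A\widehat{\mathbf S})$, $\widehat{\mathbf S}=\mathbf A\nabla\widehat{\mathbf v}$ on $\mathcal D$ with $\widehat{\mathbf v}=0$ on $\partial\mathcal D$, where $a_{kj}(\mathbf x)=\int a(\mathbf x,\mathbf y)\Phi_k(\mathbf y)\Phi_j(\mathbf y)\rho(\mathbf y)d\mathbf y$ for orthonormal polynomials $\Phi_m$ with respect to the density $\rho$ of $\mathbf y$. Here ''$\cdot$'' denotes the Euclidean/Frobenius inner product of vectors or matrices, divergence and gradient act row-wise, and $\mathbf A^-$ is the matrix with entries $a_{kj}^-$. The analogous result holds with the other alternating choice ($\mathbf A^+\widehat{\mathbf S}_h^+$ and $\widehat{\mathbf v}_h^-$). *)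

From Stdlib Require Import Reals.
From Coquelicot Require Import Coquelicot.
Open Scope R_scope.

Fixpoint sumR (n : nat) (f : nat -> R) : R :=
  match n with O => 0 | S n' => sumR n' f + f n' end.

(* Polynomial in (x,z) of total degree <= k with coefficients c a b of x^a z^b. *)
Definition poly2 (k : nat) (c : nat -> nat -> R) (x z : R) : R :=
  sumR (S k) (fun a => sumR (S k - a) (fun b => c a b * x ^ a * z ^ b)).

Definition is_poly2 (k : nat) (f : R -> R -> R) : Prop :=
  exists c : nat -> nat -> R, forall x z, f x z = poly2 k c x z.

Definition pdx (f : R -> R -> R) : R -> R -> R :=
  fun x z => Derive (fun y => f y z) x.
Definition pdz (f : R -> R -> R) : R -> R -> R :=
  fun x z => Derive (fun y => f x y) z.
Definition grad (d : nat) (f : R -> R -> R) : R -> R -> R :=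
  match d with O => pdx f | _ => pdz f end.

(* Iterated partial derivatives; smooth2 f = all iterated partials exist
   and are (jointly) continuous, i.e. f is C^infinity on R^2. *)
Fixpoint iter_pd (w : list bool) (f : R -> R -> R) : R -> R -> R :=
  match w with
  | nil => f
  | cons b w' => (if b then pdx else pdz) (iter_pd w' f)
  end.
Definition smooth2 (f : R -> R -> R) : Prop :=
  forall (w : list bool) (x z : R),
    ex_derive (fun y => iter_pd w f y z) x /\
    ex_derive (fun y => iter_pd w f x y) z /\
    continuity_2d_pt (iter_pd w f) x z.

Definition cint (x0 x1 z0 z1 : R) (f : R -> R -> R) : R :=
  RInt (fun x => RInt (fun z => f x z) z0 z1) x0 x1.

(* Time derivatives of a time-dependent cellwise field
   v : R (time) -> nat (i) -> nat (j) -> nat (component) -> R -> R -> R. *)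
Definition dtv (v : R -> nat -> nat -> nat -> R -> R -> R) t i j m x z : R :=
  Derive (fun s => v s i j m x z) t.
Definition dttv (v : R -> nat -> nat -> nat -> R -> R -> R) t i j m x z : R :=
  Derive (fun s => dtv v s i j m x z) t.

Definition zero3 : nat -> R -> R -> R := fun _ _ _ => 0.

Definition AS_dot (M : nat) (A : nat -> nat -> R -> R -> R)
  (Sm : nat -> nat -> R -> R -> R) (d : nat) (x z : R)
  (q : nat -> R -> R -> R) : R :=
  sumR M (fun k => sumR M (fun l => A k l x z * Sm l d x z) * q k x z).

Definition Av_dot (M : nat) (A : nat -> nat -> R -> R -> R)
  (vv : nat -> R -> R -> R) (d : nat) (x z : R)
  (w : nat -> nat -> R -> R -> R) : R :=
  sumR M (fun k => sumR M (fun l => A k l x z * vv l x z) * w k d x z).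

(* Mesh data: nodes xs 0 < ... < xs Nx (x_{1/2},...,x_{Nx+1/2}), same for zs;
   cell (i,j) = [xs i, xs (i+1)] x [zs j, zs (j+1)], 0 <= i < Nx, 0 <= j < Nz.
   Coefficient a i j k l : the smooth restriction of a_kl to cell (i,j)
   (extended to R^2).  Fields: v t i j m x z, S t i j m d x z, on cell (i,j). *)

(* Boundary term (A^- S^- nu, p)_{dK} of the first equation.  The "-" trace
   comes from the left/lower neighbour; on dD the interior trace is used
   (Nat.pred 0 = 0). *)
Definition bnd1 (M : nat) (xs zs : nat -> R)
  (a : nat -> nat -> nat -> nat -> R -> R -> R)
  (Sh : nat -> nat -> nat -> nat -> R -> R -> R)
  (i j : nat) (q : nat -> R -> R -> R) : R :=
  RInt (fun z => AS_dot M (a i j) (Sh i j) 0 (xs (S i)) z q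
               - AS_dot M (a (Nat.pred i) j) (Sh (Nat.pred i) j) 0 (xs i) z q)
       (zs j) (zs (S j))
  + RInt (fun x => AS_dot M (a i j) (Sh i j) 1 x (zs (S j)) q
               - AS_dot M (a i (Nat.pred j)) (Sh i (Nat.pred j)) 1 x (zs j) q)
       (xs i) (xs (S i)).

(* Boundary term (A v^+, w nu)_{dK} of the second equation, A from inside K.
   The "+" trace comes from the right/upper neighbour; on dD the Dirichlet
   value 0 is used. *)
Definition bnd2 (M Nx Nz : nat) (xs zs : nat -> R)
  (a : nat -> nat -> nat -> nat -> R -> R -> R)
  (vh : nat -> nat -> nat -> R -> R -> R)
  (i j : nat) (w : nat -> nat -> R -> R -> R) : R :=
  let vR := if Nat.ltb (S i) Nx then vh (S i) j else zero3 in
  let vL := if Nat.ltb 0 i then vh i j else zero3 in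
  let vT := if Nat.ltb (S j) Nz then vh i (S j) else zero3 in
  let vB := if Nat.ltb 0 j then vh i j else zero3 in
  RInt (fun z => Av_dot M (a i j) vR 0 (xs (S i)) z w
               - Av_dot M (a i j) vL 0 (xs i) z w)
       (zs j) (zs (S j))
  + RInt (fun x => Av_dot M (a i j) vT 1 x (zs (S j)) w
               - Av_dot M (a i j) vB 1 x (zs j) w)
       (xs i) (xs (S i)).

Definition ldg_eq1 (M : nat) (xs zs : nat -> R)
  (a : nat -> nat -> nat -> nat -> R -> R -> R)
  (v : R -> nat -> nat -> nat -> R -> R -> R)
  (Sh : R -> nat -> nat -> nat -> nat -> R -> R -> R)
  (t : R) (i j : nat) (q : nat -> R -> R -> R) : Prop :=
  cint (xs i) (xs (S i)) (zs j) (zs (S j))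
    (fun x z =>
       sumR M (fun m => dttv v t i j m x z * q m x z)
     + sumR M (fun k => sumR 2 (fun d =>
          sumR M (fun l => a i j k l x z * Sh t i j l d x z) * grad d (q k) x z)))
  - bnd1 M xs zs a (Sh t) i j q = 0.

Definition ldg_eq2 (M Nx Nz : nat) (xs zs : nat -> R)
  (a : nat -> nat -> nat -> nat -> R -> R -> R)
  (v : R -> nat -> nat -> nat -> R -> R -> R)
  (Sh : R -> nat -> nat -> nat -> nat -> R -> R -> R)
  (t : R) (i j : nat) (w : nat -> nat -> R -> R -> R) : Prop :=
  cint (xs i) (xs (S i)) (zs j) (zs (S j))
    (fun x z =>
       sumR M (fun k => sumR 2 (fun d => Sh t i j k d x z * w k d x z))
     + sumR M (fun k =>
          sumR M (fun l => a i j k l x z * v t i j l x z)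
          * (pdx (w k 0%nat) x z + pdz (w k 1%nat) x z))
     + sumR M (fun k => sumR 2 (fun d =>
          sumR M (fun l => v t i j l x z * grad d (a i j k l) x z) * w k d x z)))
  - bnd2 M Nx Nz xs zs a (v t) i j w = 0.

Definition energy (M Nx Nz : nat) (xs zs : nat -> R)
  (v : R -> nat -> nat -> nat -> R -> R -> R)
  (Sh : R -> nat -> nat -> nat -> nat -> R -> R -> R) (t : R) : R :=
  sumR Nx (fun i => sumR Nz (fun j =>
    cint (xs i) (xs (S i)) (zs j) (zs (S j))
      (fun x z =>
         sumR M (fun m => dtv v t i j m x z * dtv v t i j m x z)
       + sumR M (fun m => sumR 2 (fun d => Sh t i j m d x z * Sh t i j m d x z))))).

(** The energy is differentiated cell by cell.  The kinetic part is handled by the first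
    equation tested with [dtv].  The strain [S_h] carries no assumed time regularity: the second
    equation, tested with time-independent test functions, expresses its moments against a
    polynomial basis through [v_h], which is differentiable.  As [S_h s - S_h t] is a polynomial, its
    squared L2 norm is bounded by the squared increments of these moments (the Gram matrix of the
    basis is positive semidefinite), hence is [o(s - t)], and the derivative of the strain energy is
    obtained by testing with [S_h t].  Adding both rates, the volume terms combine, by the symmetry
    of [A] and the product rule, into the divergence of [A dtv . S nu]; with the alternating fluxes
    the boundary terms then reduce on each cell to the difference of the fluxes through its
    right/upper and left/lower edges, which telescope over the mesh and vanish at the Dirichlet
    boundary. *)

From Stdlib Require Import Reals Lra Lia.
From Coquelicot Require Import Coquelicot.
Open Scope R_scope.

Lemma sumR_ext n f g : (forall i, (i < n)%nat -> f i = g i) -> sumR n f = sumR n g.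
Proof.
  induction n as [|n IH]; intros H; simpl; [reflexivity|].
  rewrite IH by (intros; apply H; lia). now rewrite H by lia.
Qed.

Lemma sumR_S n f : sumR (S n) f = sumR n f + f n.
Proof. reflexivity. Qed.

Lemma sumR_plus n f g : sumR n (fun i => f i + g i) = sumR n f + sumR n g.
Proof. induction n; simpl; [lra|]. rewrite IHn. lra. Qed.

Lemma sumR_minus n f g : sumR n (fun i => f i - g i) = sumR n f - sumR n g.
Proof. induction n; simpl; [lra|]. rewrite IHn. lra. Qed.

Lemma sumR_scal_l n c f : sumR n (fun i => c * f i) = c * sumR n f.
Proof. induction n; simpl; [lra|]. rewrite IHn. lra. Qed.

Lemma sumR_scal_r n c f : sumR n (fun i => f i * c) = sumR n f * c.
Proof. induction n; simpl; [lra|]. rewrite IHn. lra. Qed.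

Lemma sumR_eq0 n f : (forall i, (i < n)%nat -> f i = 0) -> sumR n f = 0.
Proof.
  induction n as [|n IH]; intros H; simpl; [reflexivity|].
  rewrite IH by (intros; apply H; lia). rewrite H by lia. ring.
Qed.

Lemma sumR_le n f g : (forall i, (i < n)%nat -> f i <= g i) -> sumR n f <= sumR n g.
Proof.
  induction n as [|n IH]; intros H; simpl; [lra|].
  apply Rplus_le_compat; [apply IH; intros; apply H|apply H]; lia.
Qed.

Lemma sumR_ge0 n f : (forall i, (i < n)%nat -> 0 <= f i) -> 0 <= sumR n f.
Proof.
  intros H. rewrite <- (sumR_eq0 n (fun _ => 0)) by reflexivity. now apply sumR_le.
Qed.

Lemma sumR_2 f : sumR 2 f = f 0%nat + f 1%nat.
Proof. simpl. ring. Qed.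

Lemma sumR_swap n m (f : nat -> nat -> R) :
  sumR n (fun i => sumR m (fun j => f i j)) = sumR m (fun j => sumR n (fun i => f i j)).
Proof.
  induction n; simpl.
  - symmetry; now apply sumR_eq0.
  - rewrite IHn, <- sumR_plus. reflexivity.
Qed.

Lemma sumR_mult n m f g :
  sumR n f * sumR m g = sumR n (fun i => sumR m (fun j => f i * g j)).
Proof.
  rewrite <- sumR_scal_r. apply sumR_ext; intros. now rewrite <- sumR_scal_l.
Qed.

Lemma sumR_kronecker n m (h : nat -> R) : (m < n)%nat ->
  sumR n (fun i => if Nat.eqb i m then h i else 0) = h m.
Proof.
  induction n as [|n IH]; intros Hm; [lia|]. simpl.
  destruct (Nat.eqb_spec n m) as [->|Hne].
  - rewrite sumR_eq0; [ring|]. intros i Hi. destruct (Nat.eqb_spec i m); [lia|easy].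
  - rewrite IH by lia. ring.
Qed.

Lemma sumR_add n m f : sumR (n + m) f = sumR n f + sumR m (fun j => f (n + j)%nat).
Proof.
  induction m; simpl.
  - rewrite Nat.add_0_r; ring.
  - rewrite Nat.add_succ_r. simpl. rewrite IHm. ring.
Qed.

Lemma div_mod_pair a b K : (b < K)%nat -> ((a * K + b) / K = a /\ (a * K + b) mod K = b)%nat.
Proof.
  intros H. assert (Hdiv : ((a * K + b) / K = a)%nat)
    by (rewrite Nat.div_add_l, Nat.div_small by lia; lia).
  split; [exact Hdiv|]. pose proof (Nat.div_mod_eq (a * K + b) K). lia.
Qed.

Lemma sumR_div_mod n m (h : nat -> nat -> R) :
  sumR (n * m) (fun r => h (r / m)%nat (r mod m)%nat) = sumR n (fun i => sumR m (fun j => h i j)).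
Proof.
  induction n as [|n IH]; simpl; [reflexivity|].
  rewrite Nat.add_comm, sumR_add, IH. f_equal. apply sumR_ext; intros j Hj.
  replace (m * n + j)%nat with (n * m + j)%nat by lia.
  destruct (div_mod_pair n j m Hj) as [-> ->]. reflexivity.
Qed.

Lemma sumR_telescope n (f : nat -> R) : (0 < n)%nat ->
  sumR n (fun i => f i - (if Nat.ltb 0 i then f (pred i) else 0)) = f (pred n).
Proof.
  induction n as [|n IH]; intros Hn; [lia|]. destruct n.
  - simpl. ring.
  - rewrite sumR_S, IH by lia. simpl. ring.
Qed.

(** * Positive semidefinite quadratic forms *)

Definition matvec n (g : nat -> nat -> R) (y : nat -> R) (i : nat) : R :=
  sumR n (fun j => g i j * y j).
Definition qform n (g : nat -> nat -> R) (y : nat -> R) : R :=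
  sumR n (fun i => y i * matvec n g y i).

Definition symmetric n (g : nat -> nat -> R) : Prop :=
  forall i j, (i < n)%nat -> (j < n)%nat -> g i j = g j i.
Definition psd n (g : nat -> nat -> R) : Prop := forall y, 0 <= qform n g y.
Definition qform_dominated n (g : nat -> nat -> R) : Prop :=
  exists C, 0 <= C /\ forall y, qform n g y <= C * sumR n (fun i => matvec n g y i ^ 2).

Definition set_nth (y : nat -> R) (n : nat) (c : R) : nat -> R :=
  fun j => if Nat.eqb j n then c else y j.

Lemma set_nth_below y n c j : (j < n)%nat -> set_nth y n c j = y j.
Proof. intros. unfold set_nth. destruct (Nat.eqb_spec j n); [lia|easy]. Qed.

Lemma set_nth_at y n c : set_nth y n c n = c.
Proof. unfold set_nth. now rewrite Nat.eqb_refl. Qed.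

Lemma matvec_ext n g y y' i : (forall j, (j < n)%nat -> y j = y' j) ->
  matvec n g y i = matvec n g y' i.
Proof. intros H. apply sumR_ext. intros. now rewrite H. Qed.

Lemma qform_ext n g y y' : (forall j, (j < n)%nat -> y j = y' j) -> qform n g y = qform n g y'.
Proof.
  intros H. apply sumR_ext. intros. rewrite H by easy. now rewrite (matvec_ext n g y y').
Qed.

Lemma qform_set_nth n g y c : qform n g (set_nth y n c) = qform n g y.
Proof. apply qform_ext. apply set_nth_below. Qed.

Lemma matvec_set_nth n g y c i : matvec n g (set_nth y n c) i = matvec n g y i.
Proof. apply matvec_ext. apply set_nth_below. Qed.

Lemma qform_S n g y : symmetric (S n) g ->
  qform (S n) g y = qform n g y + 2 * y n * matvec n g y n + g n n * y n * y n.
Proof.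
  intros Hs. unfold qform. simpl sumR at 1.
  rewrite (sumR_ext n _ (fun i => y i * matvec n g y i + y n * (g n i * y i)))
    by (intros; unfold matvec; simpl; rewrite (Hs i n) by lia; ring).
  rewrite sumR_plus, sumR_scal_l. unfold matvec. simpl. ring.
Qed.

Lemma psd_zero_pivot_row n g : symmetric (S n) g -> psd (S n) g -> g n n = 0 ->
  forall i, (i < n)%nat -> g n i = 0.
Proof.
  intros Hs Hp H0.
  assert (Hrow : forall y, matvec n g y n = 0).
  { intros y. destruct (Req_dec (matvec n g y n) 0) as [|HA]; [easy|exfalso].
    set (c := - (qform n g y + 1) / (2 * matvec n g y n)).
    specialize (Hp (set_nth y n c)).
    rewrite qform_S, qform_set_nth, matvec_set_nth, set_nth_at, H0 in Hp by easy.
    replace (2 * c * matvec n g y n) with (- (qform n g y + 1)) in Hp by (unfold c; field; easy).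
    lra. }
  intros i Hi. specialize (Hrow (fun j => if Nat.eqb j i then 1 else 0)).
  unfold matvec in Hrow.
  rewrite (sumR_ext n _ (fun j => if Nat.eqb j i then g n j else 0)) in Hrow
    by (intros j _; destruct (Nat.eqb j i); ring).
  now rewrite sumR_kronecker in Hrow.
Qed.

Lemma qform_dominated_zero_pivot n g : symmetric (S n) g -> psd (S n) g -> g n n = 0 ->
  qform_dominated n g -> qform_dominated (S n) g.
Proof.
  intros Hs Hp H0 [C [HC HB]]. exists C. split; [easy|]. intros y.
  pose proof (psd_zero_pivot_row n g Hs Hp H0) as Hrow.
  assert (Hmv : matvec n g y n = 0)
    by (apply sumR_eq0; intros j Hj; rewrite Hrow by easy; ring).
  rewrite qform_S, Hmv, H0 by easy. rewrite sumR_S.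
  rewrite (sumR_ext n (fun i => matvec (S n) g y i ^ 2) (fun i => matvec n g y i ^ 2)).
  - specialize (HB y). pose proof (pow2_ge_0 (matvec (S n) g y n)). nra.
  - intros i Hi. unfold matvec. rewrite sumR_S, (Hs i n), Hrow by lia. ring.
Qed.

Definition schur n (g : nat -> nat -> R) (i j : nat) : R := g i j - g i n * g n j / g n n.

Section Schur.
Variables (n : nat) (g : nat -> nat -> R).
Hypotheses (Hs : symmetric (S n) g) (Hpiv : 0 < g n n).

Lemma matvec_schur y i :
  matvec n (schur n g) y i = matvec n g y i - g i n * matvec n g y n / g n n.
Proof.
  unfold matvec, schur.
  rewrite (sumR_ext n _ (fun j => g i j * y j - (g i n / g n n) * (g n j * y j)))
    by (intros; field; lra).
  rewrite sumR_minus, sumR_scal_l. field. lra.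
Qed.

Lemma qform_schur y : qform n (schur n g) y = qform n g y - matvec n g y n ^ 2 / g n n.
Proof.
  unfold qform.
  rewrite (sumR_ext n _ (fun i => y i * matvec n g y i - (matvec n g y n / g n n) * (g n i * y i))).
  - rewrite sumR_minus, sumR_scal_l.
    change (sumR n (fun i => g n i * y i)) with (matvec n g y n). field. lra.
  - intros i Hi. rewrite matvec_schur, (Hs i n) by lia. field. lra.
Qed.

Lemma schur_symmetric : symmetric n (schur n g).
Proof. intros i j Hi Hj. unfold schur. rewrite (Hs i j), (Hs i n), (Hs j n) by lia. field. lra. Qed.

(* Completing the square in the last coordinate. *)
Lemma schur_psd : psd (S n) g -> psd n (schur n g).
Proof.
  intros Hp y. set (A := matvec n g y n).
  specialize (Hp (set_nth y n (- A / g n n))).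
  rewrite qform_S, qform_set_nth, matvec_set_nth, set_nth_at in Hp by easy.
  rewrite qform_schur. fold A.
  replace (qform n g y - A ^ 2 / g n n)
    with (qform n g y + 2 * (- A / g n n) * A + g n n * (- A / g n n) * (- A / g n n))
    by (field; lra).
  exact Hp.
Qed.

Lemma qform_dominated_schur : qform_dominated n (schur n g) -> qform_dominated (S n) g.
Proof.
  intros [C [HC HB]].
  set (p := g n n) in *.
  set (Rr := sumR n (fun i => (g i n / p) ^ 2)).
  assert (HR : 0 <= Rr) by (apply sumR_ge0; intros; apply pow2_ge_0).
  assert (Hp' : 0 < / p) by (apply Rinv_0_lt_compat; lra).
  exists (2 * C + 2 * C * Rr + / p). split; [nra|]. intros y.
  set (B := matvec (S n) g y n).
  assert (HBn : B = matvec n g y n + p * y n) by (unfold B, matvec; simpl; fold p; ring).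
  assert (Hq : qform (S n) g y = qform n (schur n g) y + / p * B ^ 2)
    by (rewrite qform_S, qform_schur, HBn by easy; fold p; field; lra).
  set (S' := sumR n (fun i => matvec (S n) g y i ^ 2)).
  set (T := sumR n (fun i => matvec n (schur n g) y i ^ 2)).
  assert (HT : T <= 2 * S' + 2 * Rr * B ^ 2).
  { unfold T, S', Rr. rewrite <- sumR_scal_l, Rmult_assoc, <- sumR_scal_r, <- sumR_scal_l, <- sumR_plus.
    apply sumR_le. intros i Hi.
    replace (matvec n (schur n g) y i) with (matvec (S n) g y i - (g i n / p) * B)
      by (rewrite matvec_schur, HBn; unfold matvec; simpl; fold p; field; lra).
    pose proof (pow2_ge_0 (matvec (S n) g y i + (g i n / p) * B)). nra. }
  rewrite Hq, sumR_S. fold S'. fold B. specialize (HB y). fold T in HB.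
  assert (0 <= B ^ 2) by apply pow2_ge_0.
  assert (0 <= S') by (apply sumR_ge0; intros; apply pow2_ge_0).
  assert (C * T <= C * (2 * S' + 2 * Rr * B ^ 2)) by (apply Rmult_le_compat_l; lra).
  assert (0 <= C * Rr * S') by (apply Rmult_le_pos; [apply Rmult_le_pos|]; lra).
  assert (0 <= / p * S') by (apply Rmult_le_pos; lra).
  nra.
Qed.

End Schur.

Lemma psd_qform_dominated N g : symmetric N g -> psd N g -> qform_dominated N g.
Proof.
  revert g. induction N as [|n IH]; intros g Hs Hp.
  { exists 0. split; [lra|]. intros y. unfold qform. simpl. lra. }
  assert (Hpiv : 0 <= g n n).
  { specialize (Hp (set_nth (fun _ => 0) n 1)).
    rewrite qform_S, set_nth_at in Hp by easy.
    rewrite (qform_ext n g _ (fun _ => 0)), (matvec_ext n g _ (fun _ => 0)) in Hp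
      by apply set_nth_below.
    unfold qform, matvec in Hp. rewrite !(sumR_eq0 n) in Hp by (intros; ring). lra. }
  destruct Hpiv as [Hpos|Hzero].
  - apply qform_dominated_schur; auto. apply IH.
    + now apply schur_symmetric.
    + now apply schur_psd.
  - apply qform_dominated_zero_pivot; auto. apply IH.
    + intros i j Hi Hj. apply Hs; lia.
    + intros y. specialize (Hp (set_nth y n 0)).
      rewrite qform_S, qform_set_nth, set_nth_at in Hp by easy. lra.
Qed.

(** * Derivatives and integrals *)

(* Coquelicot's lemmas are stated for normed modules and do not unify with goals over [R];
   these are their specializations. *)
Lemma is_derive_plusR (f g : R -> R) x df dg : is_derive f x df -> is_derive g x dg ->
  is_derive (fun y => f y + g y) x (df + dg).
Proof. intros; now apply (is_derive_plus f g). Qed.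

Lemma is_derive_minusR (f g : R -> R) x df dg : is_derive f x df -> is_derive g x dg ->
  is_derive (fun y => f y - g y) x (df - dg).
Proof. intros; now apply (is_derive_minus f g). Qed.

Lemma is_derive_multR (f g : R -> R) x df dg : is_derive f x df -> is_derive g x dg ->
  is_derive (fun y => f y * g y) x (df * g x + f x * dg).
Proof. intros. apply (is_derive_mult f g); auto. intros; apply Rmult_comm. Qed.

Lemma is_derive_constR (c x : R) : is_derive (fun _ => c) x 0.
Proof. apply (is_derive_const (K := R_AbsRing) (V := R_NormedModule)). Qed.

Lemma is_derive_sumR n (f : nat -> R -> R) (df : nat -> R) x :
  (forall i, (i < n)%nat -> is_derive (f i) x (df i)) ->
  is_derive (fun y => sumR n (fun i => f i y)) x (sumR n df).
Proof.
  induction n as [|n IH]; intros H; simpl.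
  - apply is_derive_constR.
  - apply is_derive_plusR; [apply IH; intros|]; apply H; lia.
Qed.

Lemma is_derive_eq (f : R -> R) (x l l' : R) : is_derive f x l -> l = l' -> is_derive f x l'.
Proof. now intros H <-. Qed.

Lemma is_derive_near (f g : R -> R) t (d : posreal) l :
  (forall s, Rabs (s - t) < d -> g s = f s) -> is_derive g t l -> is_derive f t l.
Proof. intros H. apply is_derive_ext_loc. exists d. exact H. Qed.

Lemma is_derive_squeeze0 (f h : R -> R) t (d : posreal) :
  is_derive h t 0 -> h t = 0 -> f t = 0 ->
  (forall s, Rabs (s - t) < d -> Rabs (f s) <= h s) -> is_derive f t 0.
Proof.
  intros Hh Hh0 Hf0 Hle. apply is_derive_Reals. apply is_derive_Reals in Hh.
  intros eps Heps. destruct (Hh eps Heps) as [d2 Hd2].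
  exists (mkposreal _ (Rmin_stable_in_posreal d d2)). intros u Hne Hlt. simpl in Hlt.
  specialize (Hd2 u Hne (Rlt_le_trans _ _ _ Hlt (Rmin_r _ _))).
  rewrite Hh0, !Rminus_0_r in Hd2. rewrite Hf0, !Rminus_0_r.
  assert (Hb : Rabs (f (t + u)) <= h (t + u)).
  { apply Hle. replace (t + u - t) with u by ring. eapply Rlt_le_trans; [apply Hlt|apply Rmin_l]. }
  unfold Rdiv in *. rewrite Rabs_mult in *. eapply Rle_lt_trans; [|apply Hd2].
  apply Rmult_le_compat_r; [apply Rabs_pos|]. eapply Rle_trans; [apply Hb|apply RRle_abs].
Qed.

Lemma ex_RInt_plusR (f g : R -> R) a b : ex_RInt f a b -> ex_RInt g a b ->
  ex_RInt (fun x => f x + g x) a b.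
Proof. intros; now apply (ex_RInt_plus f g). Qed.

Lemma ex_RInt_minusR (f g : R -> R) a b : ex_RInt f a b -> ex_RInt g a b ->
  ex_RInt (fun x => f x - g x) a b.
Proof. intros; now apply (ex_RInt_minus f g). Qed.

Lemma RInt_plusR (f g : R -> R) a b : ex_RInt f a b -> ex_RInt g a b ->
  RInt (fun x => f x + g x) a b = RInt f a b + RInt g a b.
Proof. intros; now apply (RInt_plus f g). Qed.

Lemma RInt_minusR (f g : R -> R) a b : ex_RInt f a b -> ex_RInt g a b ->
  RInt (fun x => f x - g x) a b = RInt f a b - RInt g a b.
Proof. intros; now apply (RInt_minus f g). Qed.

Lemma RInt_scalR (f : R -> R) a b c : ex_RInt f a b ->
  RInt (fun x => c * f x) a b = c * RInt f a b.
Proof. intros; now apply (RInt_scal f). Qed.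

Lemma RInt_constR (c a b : R) : RInt (fun _ => c) a b = (b - a) * c.
Proof. rewrite RInt_const. reflexivity. Qed.

Lemma ex_RInt_sumR n (F : nat -> R -> R) a b : (forall i, (i < n)%nat -> ex_RInt (F i) a b) ->
  ex_RInt (fun x => sumR n (fun i => F i x)) a b.
Proof.
  induction n as [|n IH]; intros H; simpl.
  - apply ex_RInt_const.
  - apply ex_RInt_plusR; [apply IH; intros|]; apply H; lia.
Qed.

Lemma RInt_sumR n (F : nat -> R -> R) a b : (forall i, (i < n)%nat -> ex_RInt (F i) a b) ->
  RInt (fun x => sumR n (fun i => F i x)) a b = sumR n (fun i => RInt (F i) a b).
Proof.
  induction n as [|n IH]; intros H; simpl.
  - rewrite RInt_constR. ring.
  - rewrite RInt_plusR, IH; auto.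
    + apply ex_RInt_sumR. intros; apply H; lia.
Qed.

(** * Continuity and integrals on rectangles *)

Definition continuous2 (f : R -> R -> R) : Prop := forall x z, continuity_2d_pt f x z.

Lemma continuous2_const c : continuous2 (fun _ _ => c).
Proof. intros x z; apply continuity_2d_pt_const. Qed.

Lemma continuous2_fst : continuous2 (fun x _ => x).
Proof. intros x z; apply continuity_2d_pt_id1. Qed.

Lemma continuous2_snd : continuous2 (fun _ z => z).
Proof. intros x z; apply continuity_2d_pt_id2. Qed.

Lemma continuous2_plus f g : continuous2 f -> continuous2 g ->
  continuous2 (fun x z => f x z + g x z).
Proof. intros Hf Hg x z; now apply continuity_2d_pt_plus. Qed.

Lemma continuous2_minus f g : continuous2 f -> continuous2 g ->
  continuous2 (fun x z => f x z - g x z).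
Proof. intros Hf Hg x z; now apply continuity_2d_pt_minus. Qed.

Lemma continuous2_mult f g : continuous2 f -> continuous2 g ->
  continuous2 (fun x z => f x z * g x z).
Proof. intros Hf Hg x z; now apply continuity_2d_pt_mult. Qed.

Lemma continuous2_ext f g : (forall x z, f x z = g x z) -> continuous2 f -> continuous2 g.
Proof. intros E Hf x z. now apply (continuity_2d_pt_ext f). Qed.

Lemma continuous2_pow f n : continuous2 f -> continuous2 (fun x z => f x z ^ n).
Proof.
  intros Hf. induction n; simpl; [apply continuous2_const|now apply continuous2_mult].
Qed.

Lemma continuous2_sumR n (F : nat -> R -> R -> R) :
  (forall i, (i < n)%nat -> continuous2 (F i)) -> continuous2 (fun x z => sumR n (fun i => F i x z)).
Proof.
  induction n as [|n IH]; intros H; simpl; [apply continuous2_const|].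
  apply continuous2_plus; [apply IH; intros|]; apply H; lia.
Qed.

Lemma continuous2_fix_fst f x1 : continuous2 f -> continuous2 (fun _ z => f x1 z).
Proof.
  intros Hf x z eps. destruct (Hf x1 z eps) as [d Hd]. exists d. intros u v _ Hv.
  apply Hd; auto. rewrite Rminus_diag, Rabs_R0. apply cond_pos.
Qed.

Lemma continuous2_fix_snd f z1 : continuous2 f -> continuous2 (fun x _ => f x z1).
Proof.
  intros Hf x z eps. destruct (Hf x z1 eps) as [d Hd]. exists d. intros u v Hu _.
  apply Hd; auto. rewrite Rminus_diag, Rabs_R0. apply cond_pos.
Qed.

Lemma continuous2_swap f : continuous2 f -> continuous2 (fun x z => f z x).
Proof.
  intros Hf x z eps. destruct (Hf z x eps) as [d Hd]. exists d. intros u v Hu Hv. now apply Hd.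
Qed.

Lemma continuous2_section_snd f x z : continuous2 f -> continuous (fun z => f x z) z.
Proof.
  intros Hf. apply filterlim_locally. intros eps. destruct (Hf x z eps) as [d Hd].
  exists d. intros y Hy. apply Hd; [|exact Hy]. rewrite Rminus_diag, Rabs_R0. apply cond_pos.
Qed.

Lemma continuous2_section_fst f x z : continuous2 f -> continuous (fun x => f x z) x.
Proof. intros Hf. apply (continuous2_section_snd (fun z x => f x z)). now apply continuous2_swap. Qed.

Lemma ex_RInt_section_snd f x a b : continuous2 f -> ex_RInt (fun z => f x z) a b.
Proof.
  intros Hf. apply (@ex_RInt_continuous R_CompleteNormedModule).
  intros; now apply continuous2_section_snd.
Qed.

Lemma ex_RInt_section_fst f z a b : continuous2 f -> ex_RInt (fun x => f x z) a b.
Proof.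
  intros Hf. apply (@ex_RInt_continuous R_CompleteNormedModule).
  intros; now apply continuous2_section_fst.
Qed.

(* Uniform continuity of [f] on [{x} * [z0, z1]]. *)
Lemma continuous_RInt_param f z0 z1 x : continuous2 f -> z0 <= z1 ->
  continuous (fun x => RInt (fun z => f x z) z0 z1) x.
Proof.
  intros Hf Hz. apply filterlim_locally. intros eps.
  set (e := eps / (z1 - z0 + 1)).
  assert (He : 0 < e) by (apply Rdiv_lt_0_compat; [apply cond_pos|lra]).
  destruct (uniform_continuity_2d_1d' f z0 z1 x (fun z _ => Hf x z) (mkposreal e He)) as [d Hd].
  exists d. intros y Hy. change (Rabs (y - x) < d) in Hy.
  change (Rabs (RInt (fun z => f y z) z0 z1 - RInt (fun z => f x z) z0 z1) < eps).
  rewrite <- RInt_minusR by now apply ex_RInt_section_snd.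
  eapply Rle_lt_trans.
  - apply abs_RInt_le_const with (M := e); [easy| |].
    + apply ex_RInt_minusR; now apply ex_RInt_section_snd.
    + intros z Hz'. left. pose proof (Rabs_def2 _ _ Hy). pose proof (cond_pos d).
      apply Hd; simpl; try (split; lra). rewrite Rminus_diag, Rabs_R0. apply cond_pos.
  - unfold e. pose proof (cond_pos eps).
    apply Rlt_le_trans with ((z1 - z0 + 1) * (eps / (z1 - z0 + 1))); [|right; field; lra].
    apply Rmult_lt_compat_r; [apply Rdiv_lt_0_compat|]; lra.
Qed.

Lemma ex_RInt_param f z0 z1 x0 x1 : continuous2 f -> z0 <= z1 ->
  ex_RInt (fun x => RInt (fun z => f x z) z0 z1) x0 x1.
Proof.
  intros. apply (@ex_RInt_continuous R_CompleteNormedModule). intros; now apply continuous_RInt_param.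
Qed.

Section Rectangle.
Variables (x0 x1 z0 z1 : R).
Hypotheses (Hx : x0 <= x1) (Hz : z0 <= z1).

Lemma cint_plus f g : continuous2 f -> continuous2 g ->
  cint x0 x1 z0 z1 (fun x z => f x z + g x z) = cint x0 x1 z0 z1 f + cint x0 x1 z0 z1 g.
Proof.
  intros Hf Hg. unfold cint.
  rewrite (RInt_ext _ (fun x => RInt (fun z => f x z) z0 z1 + RInt (fun z => g x z) z0 z1)).
  - apply RInt_plusR; now apply ex_RInt_param.
  - intros; apply RInt_plusR; now apply ex_RInt_section_snd.
Qed.

Lemma cint_scal c f : continuous2 f ->
  cint x0 x1 z0 z1 (fun x z => c * f x z) = c * cint x0 x1 z0 z1 f.
Proof.
  intros Hf. unfold cint.
  rewrite (RInt_ext _ (fun x => c * RInt (fun z => f x z) z0 z1)).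
  - apply RInt_scalR; now apply ex_RInt_param.
  - intros; apply RInt_scalR; now apply ex_RInt_section_snd.
Qed.

Lemma cint_minus f g : continuous2 f -> continuous2 g ->
  cint x0 x1 z0 z1 (fun x z => f x z - g x z) = cint x0 x1 z0 z1 f - cint x0 x1 z0 z1 g.
Proof.
  intros Hf Hg. unfold cint.
  rewrite (RInt_ext _ (fun x => RInt (fun z => f x z) z0 z1 - RInt (fun z => g x z) z0 z1)).
  - apply RInt_minusR; now apply ex_RInt_param.
  - intros; apply RInt_minusR; now apply ex_RInt_section_snd.
Qed.

Lemma cint_ext f g : (forall x z, x0 <= x <= x1 -> z0 <= z <= z1 -> f x z = g x z) ->
  cint x0 x1 z0 z1 f = cint x0 x1 z0 z1 g.
Proof.
  intros H. unfold cint. apply RInt_ext. intros x Hx'. apply RInt_ext. intros z Hz'.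
  rewrite Rmin_left, Rmax_right in *; auto. apply H; lra.
Qed.

Lemma cint_sumR n F : (forall i, (i < n)%nat -> continuous2 (F i)) ->
  cint x0 x1 z0 z1 (fun x z => sumR n (fun i => F i x z)) = sumR n (fun i => cint x0 x1 z0 z1 (F i)).
Proof.
  induction n as [|n IH]; intros H; simpl.
  - unfold cint. rewrite (RInt_ext _ (fun _ => 0)).
    + rewrite RInt_constR. ring.
    + intros. rewrite RInt_constR. apply Rmult_0_r.
  - rewrite cint_plus, IH; auto.
    apply continuous2_sumR. intros; apply H; lia.
Qed.

Lemma cint_ge0 f : continuous2 f -> (forall x z, 0 <= f x z) -> 0 <= cint x0 x1 z0 z1 f.
Proof.
  intros Hf H. apply RInt_ge_0; auto.
  - now apply ex_RInt_param.
  - intros x _. apply RInt_ge_0; auto. now apply ex_RInt_section_snd.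
Qed.

Lemma cint_FTC_x F G :
  (forall x z, is_derive (fun y => F y z) x (G x z)) -> continuous2 G -> continuous2 F ->
  cint x0 x1 z0 z1 G = RInt (fun z => F x1 z - F x0 z) z0 z1.
Proof.
  intros HD HG HF.
  assert (HH : forall x, is_derive (fun x => RInt (fun z => F x z) z0 z1) x
                                   (RInt (fun z => G x z) z0 z1)).
  { intros x.
    replace (RInt (fun z => G x z) z0 z1) with (RInt (fun z => Derive (fun u => F u z) x) z0 z1)
      by (apply RInt_ext; intros; now apply is_derive_unique).
    apply (is_derive_RInt_param F z0 z1 x).
    - exists (mkposreal 1 Rlt_0_1). intros; eexists; apply HD.
    - intros z _. apply (continuity_2d_pt_ext G); [|apply HG].
      intros; symmetry; now apply is_derive_unique.
    - exists (mkposreal 1 Rlt_0_1). intros; now apply ex_RInt_section_snd. }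
  unfold cint. rewrite RInt_minusR by now apply ex_RInt_section_snd.
  apply is_RInt_unique, (is_RInt_derive (fun x => RInt (fun z => F x z) z0 z1)).
  - intros; apply HH.
  - intros; now apply continuous_RInt_param.
Qed.

Lemma cint_FTC_z F G :
  (forall x z, is_derive (fun y => F x y) z (G x z)) -> continuous2 G ->
  cint x0 x1 z0 z1 G = RInt (fun x => F x z1 - F x z0) x0 x1.
Proof.
  intros HD HG. unfold cint. apply RInt_ext. intros x _.
  apply is_RInt_unique, (is_RInt_derive (fun y => F x y)).
  - intros; apply HD.
  - intros; now apply continuous2_section_snd.
Qed.

End Rectangle.

(** * Polynomials in two variables *)

Definition lincomb2 (k : nat) (c : nat -> nat -> R) (m : nat -> nat -> R -> R -> R) (x z : R) : R :=
  sumR (S k) (fun a => sumR (S k - a) (fun b => c a b * m a b x z)).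

Definition monomial (a b : nat) (x z : R) : R := x ^ a * z ^ b.
Definition monomial_dx (a b : nat) (x z : R) : R := INR a * x ^ pred a * z ^ b.
Definition monomial_dz (a b : nat) (x z : R) : R := x ^ a * (INR b * z ^ pred b).

Lemma poly2_lincomb2 k c x z : poly2 k c x z = lincomb2 k c monomial x z.
Proof. unfold poly2, lincomb2, monomial. apply sumR_ext; intros; apply sumR_ext; intros; ring. Qed.

Lemma continuous2_lincomb2 k c m : (forall a b, continuous2 (m a b)) -> continuous2 (lincomb2 k c m).
Proof.
  intros H. unfold lincomb2. apply continuous2_sumR; intros; apply continuous2_sumR; intros.
  apply continuous2_mult; [apply continuous2_const|apply H].
Qed.

Lemma continuous2_monomial a b : continuous2 (monomial a b).
Proof.
  apply continuous2_mult; apply continuous2_pow; [apply continuous2_fst|apply continuous2_snd].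
Qed.

Lemma continuous2_monomial_dx a b : continuous2 (monomial_dx a b).
Proof.
  apply continuous2_mult; [apply continuous2_mult|]; [apply continuous2_const| |];
    apply continuous2_pow; [apply continuous2_fst|apply continuous2_snd].
Qed.

Lemma continuous2_monomial_dz a b : continuous2 (monomial_dz a b).
Proof.
  apply continuous2_mult; [|apply continuous2_mult]; [| apply continuous2_const|];
    apply continuous2_pow; [apply continuous2_fst|apply continuous2_snd].
Qed.

Lemma is_derive_powR n x : is_derive (fun y => y ^ n) x (INR n * x ^ pred n).
Proof.
  eapply is_derive_eq; [apply (is_derive_pow (fun y => y) n x 1), (is_derive_id (K := R_AbsRing))|].
  simpl; ring.
Qed.

Lemma is_derive_monomial_x a b x z : is_derive (fun y => monomial a b y z) x (monomial_dx a b x z).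
Proof.
  eapply is_derive_eq.
  - apply (is_derive_multR (fun y => y ^ a) (fun _ => z ^ b)); [apply is_derive_powR|apply is_derive_constR].
  - unfold monomial_dx. ring.
Qed.

Lemma is_derive_monomial_z a b x z : is_derive (fun y => monomial a b x y) z (monomial_dz a b x z).
Proof.
  eapply is_derive_eq.
  - apply (is_derive_multR (fun _ => x ^ a) (fun y => y ^ b)); [apply is_derive_constR|apply is_derive_powR].
  - unfold monomial_dz. ring.
Qed.

Lemma is_derive_lincomb2_x k c m dm x z :
  (forall a b, is_derive (fun y => m a b y z) x (dm a b x z)) ->
  is_derive (fun y => lincomb2 k c m y z) x (lincomb2 k c dm x z).
Proof.
  intros H. unfold lincomb2.
  apply is_derive_sumR; intros; apply is_derive_sumR; intros.
  apply (is_derive_scal (fun y => m _ _ y z)). apply H.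
Qed.

Lemma is_derive_lincomb2_z k c m dm x z :
  (forall a b, is_derive (fun y => m a b x y) z (dm a b x z)) ->
  is_derive (fun y => lincomb2 k c m x y) z (lincomb2 k c dm x z).
Proof.
  intros H. unfold lincomb2.
  apply is_derive_sumR; intros; apply is_derive_sumR; intros.
  apply (is_derive_scal (fun y => m _ _ x y)). apply H.
Qed.

Lemma continuous2_poly2 k c : continuous2 (poly2 k c).
Proof.
  apply (continuous2_ext (lincomb2 k c monomial)); [intros; symmetry; apply poly2_lincomb2|].
  apply continuous2_lincomb2, continuous2_monomial.
Qed.

Section Poly2.
Variables (k : nat) (f : R -> R -> R).
Hypothesis Hf : is_poly2 k f.

Lemma is_poly2_continuous2 : continuous2 f.
Proof.
  destruct Hf as [c Hc]. apply (continuous2_ext (poly2 k c)); [intros; symmetry; apply Hc|].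
  apply continuous2_poly2.
Qed.

Lemma is_poly2_derive_x_lincomb2 : exists c, forall x z, is_derive (fun y => f y z) x (lincomb2 k c monomial_dx x z).
Proof.
  destruct Hf as [c Hc]. exists c. intros x z.
  apply (is_derive_ext (fun y => lincomb2 k c monomial y z)); [intros; rewrite Hc; symmetry; apply poly2_lincomb2|].
  apply is_derive_lincomb2_x. intros; apply is_derive_monomial_x.
Qed.

Lemma is_poly2_derive_z_lincomb2 : exists c, forall x z, is_derive (fun y => f x y) z (lincomb2 k c monomial_dz x z).
Proof.
  destruct Hf as [c Hc]. exists c. intros x z.
  apply (is_derive_ext (fun y => lincomb2 k c monomial x y)); [intros; rewrite Hc; symmetry; apply poly2_lincomb2|].
  apply is_derive_lincomb2_z. intros; apply is_derive_monomial_z.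
Qed.

Lemma is_derive_poly2_pdx x z : is_derive (fun y => f y z) x (pdx f x z).
Proof.
  destruct is_poly2_derive_x_lincomb2 as [c Hc]. apply Derive_correct. eexists. apply Hc.
Qed.

Lemma is_derive_poly2_pdz x z : is_derive (fun y => f x y) z (pdz f x z).
Proof.
  destruct is_poly2_derive_z_lincomb2 as [c Hc]. apply Derive_correct. eexists. apply Hc.
Qed.

Lemma continuous2_poly2_pdx : continuous2 (pdx f).
Proof.
  destruct is_poly2_derive_x_lincomb2 as [c Hc].
  apply (continuous2_ext (lincomb2 k c monomial_dx)); [intros; symmetry; apply is_derive_unique, Hc|].
  apply continuous2_lincomb2, continuous2_monomial_dx.
Qed.

Lemma continuous2_poly2_pdz : continuous2 (pdz f).
Proof.
  destruct is_poly2_derive_z_lincomb2 as [c Hc].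
  apply (continuous2_ext (lincomb2 k c monomial_dz)); [intros; symmetry; apply is_derive_unique, Hc|].
  apply continuous2_lincomb2, continuous2_monomial_dz.
Qed.

End Poly2.

Lemma is_poly2_minus k f g : is_poly2 k f -> is_poly2 k g -> is_poly2 k (fun x z => f x z - g x z).
Proof.
  intros [c1 H1] [c2 H2]. exists (fun a b => c1 a b - c2 a b). intros x z.
  rewrite H1, H2. unfold poly2. rewrite <- sumR_minus. apply sumR_ext; intros.
  rewrite <- sumR_minus. apply sumR_ext; intros. ring.
Qed.

Lemma is_poly2_zero k : is_poly2 k (fun _ _ => 0).
Proof.
  exists (fun _ _ => 0). intros. symmetry. apply sumR_eq0; intros. apply sumR_eq0; intros. ring.
Qed.

(* [poly2_basis k r] is the monomial with exponents [(r / (k+1), r mod (k+1))] if their sum is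
   at most [k], and [0] otherwise. *)
Definition poly2_basis (k r : nat) : R -> R -> R :=
  poly2 k (fun a b => if andb (Nat.eqb a (r / S k)) (Nat.eqb b (r mod S k)) then 1 else 0).

Lemma poly2_basis_is_poly2 k r : is_poly2 k (poly2_basis k r).
Proof. eexists. reflexivity. Qed.

Lemma poly2_sumR_coef k n (w : nat -> R) (c : nat -> nat -> nat -> R) x z :
  sumR n (fun r => w r * poly2 k (c r) x z) = poly2 k (fun a b => sumR n (fun r => w r * c r a b)) x z.
Proof.
  unfold poly2.
  rewrite (sumR_ext n _ (fun r => sumR (S k) (fun a => sumR (S k - a) (fun b => w r * c r a b * x ^ a * z ^ b))))
    by (intros; rewrite <- sumR_scal_l; apply sumR_ext; intros; rewrite <- sumR_scal_l; apply sumR_ext; intros; ring).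
  rewrite sumR_swap. apply sumR_ext. intros a Ha. rewrite sumR_swap. apply sumR_ext. intros b Hb.
  rewrite !sumR_scal_r. reflexivity.
Qed.

Lemma sumR_div_mod_kronecker K (c : nat -> nat -> R) a b : (a < K)%nat -> (b < K)%nat ->
  sumR (K * K) (fun r => c (r / K)%nat (r mod K)%nat
                         * (if andb (Nat.eqb a (r / K)) (Nat.eqb b (r mod K)) then 1 else 0)) = c a b.
Proof.
  intros Ha Hb.
  rewrite (sumR_div_mod K K (fun a' b' => c a' b' * (if andb (Nat.eqb a a') (Nat.eqb b b') then 1 else 0))).
  rewrite (sumR_ext K _ (fun a' => if Nat.eqb a' a then c a' b else 0)); [now rewrite sumR_kronecker|].
  intros a' _. rewrite (Nat.eqb_sym a a'). destruct (Nat.eqb_spec a' a) as [->|Hne]; simpl.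
  - rewrite (sumR_ext K _ (fun b' => if Nat.eqb b' b then c a b' else 0)); [now rewrite sumR_kronecker|].
    intros b' _. rewrite (Nat.eqb_sym b b'). destruct (Nat.eqb b' b); ring.
  - apply sumR_eq0. intros. ring.
Qed.

Lemma poly2_basis_expansion k c x z :
  poly2 k c x z = sumR (S k * S k) (fun r => c (r / S k)%nat (r mod S k)%nat * poly2_basis k r x z).
Proof.
  unfold poly2_basis. rewrite poly2_sumR_coef. unfold poly2.
  apply sumR_ext; intros a Ha; apply sumR_ext; intros b Hb.
  rewrite sumR_div_mod_kronecker by lia. reflexivity.
Qed.

Lemma continuous2_poly2_basis k r : continuous2 (poly2_basis k r).
Proof. apply continuous2_poly2. Qed.

Section Gram.
Variables (x0 x1 z0 z1 : R) (k : nat).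
Hypotheses (Hx : x0 <= x1) (Hz : z0 <= z1).

Definition basis_comb (y : nat -> R) (x z : R) : R := sumR (S k * S k) (fun r => y r * poly2_basis k r x z).

Definition gram (r r' : nat) : R := cint x0 x1 z0 z1 (fun x z => poly2_basis k r x z * poly2_basis k r' x z).

Lemma continuous2_basis_comb y : continuous2 (basis_comb y).
Proof.
  apply continuous2_sumR. intros. apply continuous2_mult; [apply continuous2_const|apply continuous2_poly2_basis].
Qed.

Lemma cint_basis_comb_mult y h : continuous2 h ->
  sumR (S k * S k) (fun r => y r * cint x0 x1 z0 z1 (fun x z => poly2_basis k r x z * h x z))
  = cint x0 x1 z0 z1 (fun x z => basis_comb y x z * h x z).
Proof.
  intros Hh. unfold basis_comb.
  rewrite (cint_ext x0 x1 z0 z1 Hx Hz _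
             (fun x z => sumR (S k * S k) (fun r => y r * (poly2_basis k r x z * h x z))))
    by (intros; rewrite <- sumR_scal_r; apply sumR_ext; intros; ring).
  rewrite (cint_sumR x0 x1 z0 z1 Hz) by (intros; apply continuous2_mult;
    [apply continuous2_const|apply continuous2_mult; [apply continuous2_poly2_basis|exact Hh]]).
  apply sumR_ext; intros. symmetry. apply cint_scal; [easy|].
  apply continuous2_mult; [apply continuous2_poly2_basis|exact Hh].
Qed.

Lemma matvec_gram y r :
  matvec (S k * S k) gram y r = cint x0 x1 z0 z1 (fun x z => basis_comb y x z * poly2_basis k r x z).
Proof.
  rewrite <- (cint_basis_comb_mult y (poly2_basis k r)) by apply continuous2_poly2_basis.
  unfold matvec, gram. apply sumR_ext; intros r' _. rewrite Rmult_comm. apply Rmult_eq_compat_l.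
  apply cint_ext; [easy|easy|]. intros; ring.
Qed.

Lemma qform_gram y : qform (S k * S k) gram y = cint x0 x1 z0 z1 (fun x z => basis_comb y x z * basis_comb y x z).
Proof.
  rewrite <- (cint_basis_comb_mult y (basis_comb y)) by apply continuous2_basis_comb.
  apply sumR_ext; intros r _. rewrite matvec_gram. apply Rmult_eq_compat_l.
  apply cint_ext; [easy|easy|]. intros; ring.
Qed.

Lemma gram_symmetric : symmetric (S k * S k) gram.
Proof. intros r r' _ _. unfold gram. apply cint_ext; [easy|easy|]. intros; ring. Qed.

Lemma gram_psd : psd (S k * S k) gram.
Proof.
  intros y. rewrite qform_gram. apply cint_ge0; [easy|easy| |].
  - apply continuous2_mult; apply continuous2_basis_comb.
  - intros; apply Rle_0_sqr.
Qed.

Lemma cint_sq_le_moments : exists C, 0 <= C /\ forall f, is_poly2 k f ->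
  cint x0 x1 z0 z1 (fun x z => f x z * f x z)
  <= C * sumR (S k * S k) (fun r => cint x0 x1 z0 z1 (fun x z => f x z * poly2_basis k r x z) ^ 2).
Proof.
  destruct (psd_qform_dominated _ gram gram_symmetric gram_psd) as [C [HC HB]].
  exists C. split; [easy|]. intros f [c Hc].
  set (y := fun r => c (r / S k)%nat (r mod S k)%nat).
  assert (Hf : forall x z, f x z = basis_comb y x z) by (intros; rewrite Hc; apply poly2_basis_expansion).
  specialize (HB y). rewrite qform_gram in HB.
  rewrite (cint_ext x0 x1 z0 z1 Hx Hz _ (fun x z => basis_comb y x z * basis_comb y x z))
    by (intros; now rewrite Hf).
  eapply Rle_trans; [apply HB|]. right. apply Rmult_eq_compat_l. apply sumR_ext; intros r _.
  rewrite matvec_gram. apply (f_equal (fun u => u ^ 2)). apply cint_ext; [easy|easy|]. intros; now rewrite Hf.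
Qed.

End Gram.

(** * Fields with separated time dependence *)

(* Such fields can be differentiated under spatial integrals term by term. *)
Definition is_derive_sep (t : R) (F : R -> R -> R -> R) (F' : R -> R -> R) : Prop :=
  exists n (u : nat -> R -> R) (P : nat -> R -> R -> R),
    (forall i, (i < n)%nat -> ex_derive (u i) t) /\
    (forall i, (i < n)%nat -> continuous2 (P i)) /\
    (exists d : posreal, forall s, Rabs (s - t) < d ->
       forall x z, F s x z = sumR n (fun i => u i s * P i x z)) /\
    (forall x z, F' x z = sumR n (fun i => Derive (u i) t * P i x z)).

Section SeparatedDerivative.
Variable t : R.

Lemma is_derive_sep_pt F F' x z : is_derive_sep t F F' -> is_derive (fun s => F s x z) t (F' x z).
Proof.
  intros [n [u [P [Hu [HP [[d Hd] HF']]]]]].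
  apply (is_derive_near _ (fun s => sumR n (fun i => u i s * P i x z)) t d); [intros; now rewrite Hd|].
  rewrite HF'. apply is_derive_sumR. intros i Hi.
  eapply is_derive_eq.
  - apply (is_derive_multR (u i) (fun _ => P i x z)); [now apply Derive_correct, Hu|apply is_derive_constR].
  - ring.
Qed.

Lemma is_derive_sep_continuous2 F F' : is_derive_sep t F F' -> continuous2 F'.
Proof.
  intros [n [u [P [Hu [HP [_ HF']]]]]].
  apply (continuous2_ext (fun x z => sumR n (fun i => Derive (u i) t * P i x z))); [intros; now rewrite HF'|].
  apply continuous2_sumR; intros; apply continuous2_mult; [apply continuous2_const|auto].
Qed.

Lemma is_derive_sep_ext F F' G G' : is_derive_sep t F F' ->
  (exists d : posreal, forall s, Rabs (s - t) < d -> forall x z, F s x z = G s x z) ->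
  (forall x z, F' x z = G' x z) -> is_derive_sep t G G'.
Proof.
  intros [n [u [P [Hu [HP [[d Hd] HF']]]]]] [d2 Hd2] HG'.
  exists n, u, P. repeat split; auto.
  - exists (mkposreal _ (Rmin_stable_in_posreal d d2)). intros s Hs x z. simpl in Hs.
    rewrite <- Hd2, Hd; auto.
    + eapply Rlt_le_trans; [apply Hs|apply Rmin_l].
    + eapply Rlt_le_trans; [apply Hs|apply Rmin_r].
  - intros; now rewrite <- HG'.
Qed.

Lemma is_derive_sep_coef u P : ex_derive u t -> continuous2 P ->
  is_derive_sep t (fun s x z => u s * P x z) (fun x z => Derive u t * P x z).
Proof.
  intros Hu HP. exists 1%nat, (fun _ => u), (fun _ => P). repeat split; auto.
  - exists (mkposreal 1 Rlt_0_1). intros. simpl. ring.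
  - intros. simpl. ring.
Qed.

Lemma is_derive_sep_const P : continuous2 P -> is_derive_sep t (fun _ => P) (fun _ _ => 0).
Proof.
  intros HP. apply (is_derive_sep_ext (fun s x z => 1 * P x z) (fun x z => Derive (fun _ => 1) t * P x z)).
  - apply is_derive_sep_coef; [apply ex_derive_const|exact HP].
  - exists (mkposreal 1 Rlt_0_1). intros; ring.
  - intros. rewrite Derive_const. ring.
Qed.

Lemma is_derive_sep_plus F F' G G' : is_derive_sep t F F' -> is_derive_sep t G G' ->
  is_derive_sep t (fun s x z => F s x z + G s x z) (fun x z => F' x z + G' x z).
Proof.
  intros [n [u [P [Hu [HP [[d Hd] HF']]]]]] [m [w [Q [Hw [HQ [[d2 Hd2] HG']]]]]].
  exists (n + m)%nat, (fun r => if Nat.ltb r n then u r else w (r - n)%nat),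
    (fun r => if Nat.ltb r n then P r else Q (r - n)%nat).
  assert (Hsplit : forall (h : nat -> R) (h1 : nat -> R) (h2 : nat -> R),
    (forall r, h r = if Nat.ltb r n then h1 r else h2 (r - n)%nat) ->
    sumR (n + m) h = sumR n h1 + sumR m h2).
  { intros h h1 h2 Hh. rewrite sumR_add. f_equal; apply sumR_ext; intros r Hr; rewrite Hh.
    - now replace (Nat.ltb r n) with true by (symmetry; apply Nat.ltb_lt; lia).
    - replace (Nat.ltb (n + r) n) with false by (symmetry; apply Nat.ltb_ge; lia).
      now replace (n + r - n)%nat with r by lia. }
  repeat split.
  - intros r Hr. destruct (Nat.ltb_spec r n); [apply Hu|apply Hw]; lia.
  - intros r Hr. destruct (Nat.ltb_spec r n); [apply HP|apply HQ]; lia.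
  - exists (mkposreal _ (Rmin_stable_in_posreal d d2)). intros s Hs x z. simpl in Hs.
    rewrite Hd, Hd2.
    + symmetry. apply Hsplit. intros r. now destruct (Nat.ltb r n).
    + eapply Rlt_le_trans; [apply Hs|apply Rmin_r].
    + eapply Rlt_le_trans; [apply Hs|apply Rmin_l].
  - intros x z. rewrite HF', HG'. symmetry. apply Hsplit. intros r. now destruct (Nat.ltb r n).
Qed.

Lemma is_derive_sep_scal c F F' : is_derive_sep t F F' ->
  is_derive_sep t (fun s x z => c * F s x z) (fun x z => c * F' x z).
Proof.
  intros [n [u [P [Hu [HP [[d Hd] HF']]]]]].
  exists n, (fun i s => c * u i s), P. repeat split; auto.
  - intros i Hi. now apply ex_derive_scal, Hu.
  - exists d. intros s Hs x z. rewrite Hd, <- sumR_scal_l by easy. apply sumR_ext; intros; ring.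
  - intros x z. rewrite HF', <- sumR_scal_l. apply sumR_ext; intros i Hi.
    rewrite Derive_scal. ring.
Qed.

Lemma is_derive_sep_minus F F' G G' : is_derive_sep t F F' -> is_derive_sep t G G' ->
  is_derive_sep t (fun s x z => F s x z - G s x z) (fun x z => F' x z - G' x z).
Proof.
  intros HF HG. eapply is_derive_sep_ext.
  - apply (is_derive_sep_plus _ _ _ _ HF (is_derive_sep_scal (-1) _ _ HG)).
  - exists (mkposreal 1 Rlt_0_1). intros; cbv beta; ring.
  - intros; cbv beta; ring.
Qed.

Lemma is_derive_sep_mult F F' G G' : is_derive_sep t F F' -> is_derive_sep t G G' ->
  is_derive_sep t (fun s x z => F s x z * G s x z) (fun x z => F' x z * G t x z + F t x z * G' x z).
Proof.
  intros [n [u [P [Hu [HP [[d Hd] HF']]]]]] [m [w [Q [Hw [HQ [[d2 Hd2] HG']]]]]].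
  exists (n * m)%nat, (fun r s => u (r / m)%nat s * w (r mod m)%nat s),
    (fun r x z => P (r / m)%nat x z * Q (r mod m)%nat x z).
  assert (Hdm : forall r, (r < n * m)%nat -> (r / m < n)%nat /\ (r mod m < m)%nat).
  { intros r Hr. assert (m <> 0%nat) by (intro; subst; lia). split.
    - apply Nat.Div0.div_lt_upper_bound; lia.
    - now apply Nat.mod_upper_bound. }
  assert (Ht1 : Rabs (t - t) < d) by (rewrite Rminus_diag, Rabs_R0; apply cond_pos).
  assert (Ht2 : Rabs (t - t) < d2) by (rewrite Rminus_diag, Rabs_R0; apply cond_pos).
  repeat split.
  - intros r Hr. destruct (Hdm r Hr). apply ex_derive_mult; [apply Hu|apply Hw]; easy.
  - intros r Hr. destruct (Hdm r Hr). apply continuous2_mult; [apply HP|apply HQ]; easy.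
  - exists (mkposreal _ (Rmin_stable_in_posreal d d2)). intros s Hs x z. simpl in Hs.
    rewrite Hd, Hd2, sumR_mult.
    + symmetry. etransitivity; [exact (sumR_div_mod n m (fun i j => u i s * w j s * (P i x z * Q j x z)))|].
      apply sumR_ext; intros; apply sumR_ext; intros; ring.
    + eapply Rlt_le_trans; [apply Hs|apply Rmin_r].
    + eapply Rlt_le_trans; [apply Hs|apply Rmin_l].
  - intros x z. rewrite HF', HG', (Hd t Ht1), (Hd2 t Ht2), !sumR_mult, <- sumR_plus.
    set (h := fun i j => (Derive (u i) t * w j t + u i t * Derive (w j) t) * (P i x z * Q j x z)).
    transitivity (sumR (n * m) (fun r => h (r / m)%nat (r mod m)%nat)).
    + rewrite sumR_div_mod. apply sumR_ext; intros. rewrite <- sumR_plus.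
      apply sumR_ext; intros. unfold h. ring.
    + apply sumR_ext. intros r Hr. destruct (Hdm r Hr). unfold h. f_equal. symmetry.
      apply is_derive_unique, (is_derive_multR (u (r / m)%nat) (w (r mod m)%nat));
        apply Derive_correct; [apply Hu|apply Hw]; easy.
Qed.

Lemma is_derive_sep_mult_l P F F' : continuous2 P -> is_derive_sep t F F' ->
  is_derive_sep t (fun s x z => P x z * F s x z) (fun x z => P x z * F' x z).
Proof.
  intros HP HF. eapply is_derive_sep_ext.
  - apply (is_derive_sep_mult _ _ _ _ (is_derive_sep_const P HP) HF).
  - exists (mkposreal 1 Rlt_0_1); intros; reflexivity.
  - intros; cbv beta; ring.
Qed.

Lemma is_derive_sep_mult_r P F F' : continuous2 P -> is_derive_sep t F F' ->
  is_derive_sep t (fun s x z => F s x z * P x z) (fun x z => F' x z * P x z).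
Proof.
  intros HP HF. eapply is_derive_sep_ext.
  - apply (is_derive_sep_mult _ _ _ _ HF (is_derive_sep_const P HP)).
  - exists (mkposreal 1 Rlt_0_1); intros; reflexivity.
  - intros; cbv beta; ring.
Qed.

Lemma is_derive_sep_sumR n (F : nat -> R -> R -> R -> R) (F' : nat -> R -> R -> R) :
  (forall i, (i < n)%nat -> is_derive_sep t (F i) (F' i)) ->
  is_derive_sep t (fun s x z => sumR n (fun i => F i s x z)) (fun x z => sumR n (fun i => F' i x z)).
Proof.
  induction n as [|n IH]; intros H; simpl.
  - apply is_derive_sep_const, continuous2_const.
  - apply is_derive_sep_plus; [apply IH; intros|]; apply H; lia.
Qed.

Lemma is_derive_sep_fix_fst F F' x1 : is_derive_sep t F F' ->
  is_derive_sep t (fun s _ z => F s x1 z) (fun _ z => F' x1 z).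
Proof.
  intros [n [u [P [Hu [HP [[d Hd] HF']]]]]].
  exists n, u, (fun i _ z => P i x1 z). repeat split; auto.
  - intros; now apply continuous2_fix_fst, HP.
  - exists d; intros; now apply Hd.
Qed.

Lemma is_derive_sep_fix_snd F F' z1 : is_derive_sep t F F' ->
  is_derive_sep t (fun s x _ => F s x z1) (fun x _ => F' x z1).
Proof.
  intros [n [u [P [Hu [HP [[d Hd] HF']]]]]].
  exists n, u, (fun i x _ => P i x z1). repeat split; auto.
  - intros; now apply continuous2_fix_snd, HP.
  - exists d; intros; now apply Hd.
Qed.

Lemma is_derive_sep_swap F F' : is_derive_sep t F F' ->
  is_derive_sep t (fun s x z => F s z x) (fun x z => F' z x).
Proof.
  intros [n [u [P [Hu [HP [[d Hd] HF']]]]]].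
  exists n, u, (fun i x z => P i z x). repeat split; auto.
  - intros; now apply continuous2_swap, HP.
  - exists d; intros; now apply Hd.
Qed.

Lemma is_derive_sep_RInt_snd F F' x z0 z1 : is_derive_sep t F F' ->
  is_derive (fun s => RInt (fun z => F s x z) z0 z1) t (RInt (fun z => F' x z) z0 z1).
Proof.
  intros [n [u [P [Hu [HP [[d Hd] HF']]]]]].
  assert (HI : forall (v : nat -> R), RInt (fun z => sumR n (fun i => v i * P i x z)) z0 z1
                                     = sumR n (fun i => v i * RInt (fun z => P i x z) z0 z1)).
  { intros v. rewrite RInt_sumR.
    - apply sumR_ext; intros. now apply RInt_scalR, ex_RInt_section_snd, HP.
    - intros. now apply (ex_RInt_scal (fun z => P i x z)), ex_RInt_section_snd, HP. }
  apply (is_derive_near _ (fun s => sumR n (fun i => u i s * RInt (fun z => P i x z) z0 z1)) t d).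
  { intros s Hs. rewrite <- (HI (fun i => u i s)). apply RInt_ext. intros; symmetry; now apply Hd. }
  rewrite (RInt_ext _ (fun z => sumR n (fun i => Derive (u i) t * P i x z))), HI by (intros; apply HF').
  apply is_derive_sumR. intros i Hi. eapply is_derive_eq.
  - apply (is_derive_multR (u i) (fun _ => RInt (fun z => P i x z) z0 z1));
      [now apply Derive_correct, Hu|apply is_derive_constR].
  - ring.
Qed.

Lemma is_derive_sep_RInt_fst F F' z x0 x1 : is_derive_sep t F F' ->
  is_derive (fun s => RInt (fun x => F s x z) x0 x1) t (RInt (fun x => F' x z) x0 x1).
Proof. intros HF. exact (is_derive_sep_RInt_snd _ _ z x0 x1 (is_derive_sep_swap F F' HF)). Qed.

Lemma is_derive_sep_cint F F' x0 x1 z0 z1 : x0 <= x1 -> z0 <= z1 -> is_derive_sep t F F' ->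
  is_derive (fun s => cint x0 x1 z0 z1 (F s)) t (cint x0 x1 z0 z1 F').
Proof.
  intros Hx Hz [n [u [P [Hu [HP [[d Hd] HF']]]]]].
  assert (HI : forall (v : nat -> R), cint x0 x1 z0 z1 (fun x z => sumR n (fun i => v i * P i x z))
                                     = sumR n (fun i => v i * cint x0 x1 z0 z1 (P i))).
  { intros v. rewrite (cint_sumR x0 x1 z0 z1 Hz)
      by (intros; apply continuous2_mult; [apply continuous2_const|auto]).
    apply sumR_ext; intros. now apply cint_scal, HP. }
  apply (is_derive_near _ (fun s => sumR n (fun i => u i s * cint x0 x1 z0 z1 (P i))) t d).
  { intros s Hs. rewrite <- (HI (fun i => u i s)). apply cint_ext; auto. intros; symmetry; now apply Hd. }
  rewrite (cint_ext x0 x1 z0 z1 Hx Hz F' (fun x z => sumR n (fun i => Derive (u i) t * P i x z)))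
    by (intros; apply HF').
  rewrite HI. apply is_derive_sumR. intros i Hi. eapply is_derive_eq.
  - apply (is_derive_multR (u i) (fun _ => cint x0 x1 z0 z1 (P i)));
      [now apply Derive_correct, Hu|apply is_derive_constR].
  - ring.
Qed.

Lemma is_derive_sep_RInt_snd_diff F F' G G' x1 x0 z0 z1 :
  is_derive_sep t F F' -> is_derive_sep t G G' ->
  is_derive (fun s => RInt (fun z => F s x1 z - G s x0 z) z0 z1) t (RInt (fun z => F' x1 z - G' x0 z) z0 z1).
Proof.
  intros HF HG.
  apply (is_derive_sep_RInt_snd (fun s _ z => F s x1 z - G s x0 z) (fun _ z => F' x1 z - G' x0 z) 0).
  now apply is_derive_sep_minus; [apply is_derive_sep_fix_fst|apply is_derive_sep_fix_fst].
Qed.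

Lemma is_derive_sep_RInt_fst_diff F F' G G' z1 z0 x0 x1 :
  is_derive_sep t F F' -> is_derive_sep t G G' ->
  is_derive (fun s => RInt (fun x => F s x z1 - G s x z0) x0 x1) t (RInt (fun x => F' x z1 - G' x z0) x0 x1).
Proof.
  intros HF HG.
  apply (is_derive_sep_RInt_fst (fun s x _ => F s x z1 - G s x z0) (fun x _ => F' x z1 - G' x z0) 0).
  now apply is_derive_sep_minus; [apply is_derive_sep_fix_snd|apply is_derive_sep_fix_snd].
Qed.

Lemma is_derive_sep_lincomb2 k (u : nat -> nat -> R -> R) m :
  (forall a b, ex_derive (u a b) t) -> (forall a b, continuous2 (m a b)) ->
  is_derive_sep t (fun s => lincomb2 k (fun a b => u a b s) m) (lincomb2 k (fun a b => Derive (u a b) t) m).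
Proof.
  intros Hu Hm. unfold lincomb2.
  apply (is_derive_sep_sumR (S k) (fun a s x z => sumR (S k - a) (fun b => u a b s * m a b x z))
           (fun a x z => sumR (S k - a) (fun b => Derive (u a b) t * m a b x z))).
  intros a _. apply (is_derive_sep_sumR (S k - a) (fun b s x z => u a b s * m a b x z)
                       (fun b x z => Derive (u a b) t * m a b x z)).
  intros b _. now apply is_derive_sep_coef.
Qed.

End SeparatedDerivative.

(** * Energy conservation for the LDG scheme *)

Definition bform (M : nat) (A : nat -> nat -> R) (u w : nat -> R) : R :=
  sumR M (fun k => sumR M (fun l => A k l * u l) * w k).

Lemma bform_expand M A u w :
  bform M A u w = sumR M (fun k => sumR M (fun l => A k l * u l * w k)).
Proof. apply sumR_ext. intros. now rewrite sumR_scal_r. Qed.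

Lemma bform_sym M A u w : (forall k l, (k < M)%nat -> (l < M)%nat -> A k l = A l k) ->
  bform M A u w = bform M A w u.
Proof.
  intros HA. rewrite !bform_expand, sumR_swap.
  apply sumR_ext; intros; apply sumR_ext; intros. rewrite HA by easy. ring.
Qed.

Lemma bform_zero_l M A w : bform M A (fun _ => 0) w = 0.
Proof. apply sumR_eq0. intros. rewrite sumR_eq0 by (intros; ring). ring. Qed.

Lemma is_derive_bform M (A : nat -> nat -> R -> R) (u w : nat -> R -> R) dA du dw y :
  (forall k l, (k < M)%nat -> (l < M)%nat -> is_derive (A k l) y (dA k l)) ->
  (forall l, (l < M)%nat -> is_derive (u l) y (du l)) ->
  (forall k, (k < M)%nat -> is_derive (w k) y (dw k)) ->
  is_derive (fun y => bform M (fun k l => A k l y) (fun l => u l y) (fun k => w k y)) y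
    (bform M dA (fun l => u l y) (fun k => w k y) + bform M (fun k l => A k l y) du (fun k => w k y)
     + bform M (fun k l => A k l y) (fun l => u l y) dw).
Proof.
  intros HA Hu Hw.
  apply (is_derive_ext (fun y => sumR M (fun k => sumR M (fun l => A k l y * u l y * w k y))));
    [intros; symmetry; apply bform_expand|].
  eapply is_derive_eq; [apply is_derive_sumR; intros k Hk; apply is_derive_sumR; intros l Hl|].
  - apply (is_derive_multR (fun y => A k l y * u l y) (w k)); [|now apply Hw].
    apply (is_derive_multR (A k l) (u l)); auto.
  - rewrite !bform_expand, <- !sumR_plus. apply sumR_ext; intros.
    rewrite <- !sumR_plus. apply sumR_ext; intros. ring.
Qed.

Lemma continuous2_bform M (A : nat -> nat -> R -> R -> R) (u w : nat -> R -> R -> R) :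
  (forall k l, (k < M)%nat -> (l < M)%nat -> continuous2 (A k l)) ->
  (forall l, (l < M)%nat -> continuous2 (u l)) -> (forall k, (k < M)%nat -> continuous2 (w k)) ->
  continuous2 (fun x z => bform M (fun k l => A k l x z) (fun l => u l x z) (fun k => w k x z)).
Proof.
  intros HA Hu Hw. unfold bform.
  apply continuous2_sumR; intros. apply continuous2_mult; auto.
  apply continuous2_sumR; intros. apply continuous2_mult; auto.
Qed.

Lemma Av_dot_bform M A vv d x z w :
  Av_dot M A vv d x z w = bform M (fun p q => A p q x z) (fun l => vv l x z) (fun p => w p d x z).
Proof. reflexivity. Qed.

Lemma AS_dot_bform M A Sm d x z q :
  AS_dot M A Sm d x z q = bform M (fun p q => A p q x z) (fun l => Sm l d x z) (fun p => q p x z).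
Proof. reflexivity. Qed.

Lemma Av_dot_zero3 M A d x z W : Av_dot M A zero3 d x z W = 0.
Proof. apply bform_zero_l. Qed.

Section LDG.
Variables (k M Nx Nz : nat) (xs zs : nat -> R)
  (a : nat -> nat -> nat -> nat -> R -> R -> R)
  (v : R -> nat -> nat -> nat -> R -> R -> R)
  (Sh : R -> nat -> nat -> nat -> nat -> R -> R -> R)
  (c : R -> nat -> nat -> nat -> nat -> nat -> R).
Hypothesis Hxs : forall i, (i < Nx)%nat -> xs i < xs (S i).
Hypothesis Hzs : forall j, (j < Nz)%nat -> zs j < zs (S j).
Hypothesis Hsmooth : forall i j p q, (i < Nx)%nat -> (j < Nz)%nat ->
  (p < M)%nat -> (q < M)%nat -> smooth2 (a i j p q).
Hypothesis Hsym : forall i j p q x z, (i < Nx)%nat -> (j < Nz)%nat ->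
  (p < M)%nat -> (q < M)%nat -> xs i <= x <= xs (S i) -> zs j <= z <= zs (S j) ->
  a i j p q x z = a i j q p x z.
Hypothesis Hvc : forall s i j m x z, 0 < s -> (i < Nx)%nat -> (j < Nz)%nat -> (m < M)%nat ->
  v s i j m x z = poly2 k (c s i j m) x z.
Hypothesis Hvd : forall s i j m p q, 0 < s ->
  ex_derive (fun r => c r i j m p q) s /\ ex_derive (fun r => Derive (fun r' => c r' i j m p q) r) s.
Hypothesis HS : forall s i j m d, 0 < s -> (i < Nx)%nat -> (j < Nz)%nat ->
  (m < M)%nat -> (d < 2)%nat -> is_poly2 k (Sh s i j m d).
Hypothesis Heq1 : forall s i j (p : nat -> nat -> nat -> R -> R -> R), 0 < s ->
  (i < Nx)%nat -> (j < Nz)%nat ->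
  (forall i' j' m, (i' < Nx)%nat -> (j' < Nz)%nat -> (m < M)%nat -> is_poly2 k (p i' j' m)) ->
  ldg_eq1 M xs zs a v Sh s i j (p i j).
Hypothesis Heq2 : forall s i j (w : nat -> nat -> nat -> nat -> R -> R -> R), 0 < s ->
  (i < Nx)%nat -> (j < Nz)%nat ->
  (forall i' j' m d, (i' < Nx)%nat -> (j' < Nz)%nat -> (m < M)%nat -> (d < 2)%nat ->
     is_poly2 k (w i' j' m d)) ->
  ldg_eq2 M Nx Nz xs zs a v Sh s i j (w i j).

Definition cell i j : Prop := (i < Nx)%nat /\ (j < Nz)%nat.
Definition cellint i j : (R -> R -> R) -> R := cint (xs i) (xs (S i)) (zs j) (zs (S j)).

Lemma cell_bounds i j : cell i j -> xs i <= xs (S i) /\ zs j <= zs (S j).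
Proof. intros [Hi Hj]. split; left; auto. Qed.

Section Coefficients.
Variables (i j p q : nat).
Hypotheses (Hij : cell i j) (Hp : (p < M)%nat) (Hq : (q < M)%nat).

Lemma coef_continuous2 : continuous2 (a i j p q).
Proof. destruct Hij as [Hi Hj]. intros x z. apply (Hsmooth i j p q Hi Hj Hp Hq nil x z). Qed.

Lemma coef_grad_continuous2 d : continuous2 (grad d (a i j p q)).
Proof.
  destruct Hij as [Hi Hj]. intros x z.
  destruct d; [apply (Hsmooth i j p q Hi Hj Hp Hq (cons true nil) x z)
              |apply (Hsmooth i j p q Hi Hj Hp Hq (cons false nil) x z)].
Qed.

Lemma is_derive_coef_x x z : is_derive (fun y => a i j p q y z) x (pdx (a i j p q) x z).
Proof. destruct Hij as [Hi Hj]. apply Derive_correct, (Hsmooth i j p q Hi Hj Hp Hq nil x z). Qed.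

Lemma is_derive_coef_z x z : is_derive (fun y => a i j p q x y) z (pdz (a i j p q) x z).
Proof. destruct Hij as [Hi Hj]. apply Derive_correct, (Hsmooth i j p q Hi Hj Hp Hq nil x z). Qed.

End Coefficients.

Section Velocity.
Variables (i j m : nat).
Hypotheses (Hij : cell i j) (Hm : (m < M)%nat).

Lemma v_is_poly2 s : 0 < s -> is_poly2 k (v s i j m).
Proof. destruct Hij. exists (c s i j m). intros; now apply Hvc. Qed.

Lemma v_is_derive_sep s : 0 < s ->
  is_derive_sep s (fun r => v r i j m) (lincomb2 k (fun p q => Derive (fun r => c r i j m p q) s) monomial).
Proof.
  intros Hs. destruct Hij as [Hi Hj]. eapply is_derive_sep_ext.
  - apply (is_derive_sep_lincomb2 s k (fun p q r => c r i j m p q));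
      [intros p q; exact (proj1 (Hvd s i j m p q Hs))|apply continuous2_monomial].
  - exists (mkposreal s Hs). intros r Hr x z. simpl in Hr. pose proof (Rabs_def2 _ _ Hr).
    rewrite Hvc, poly2_lincomb2 by (auto; lra). reflexivity.
  - intros; reflexivity.
Qed.

Lemma dtv_lincomb2 s x z : 0 < s ->
  dtv v s i j m x z = lincomb2 k (fun p q => Derive (fun r => c r i j m p q) s) monomial x z.
Proof.
  intros Hs. apply is_derive_unique.
  exact (is_derive_sep_pt s (fun r => v r i j m) _ x z (v_is_derive_sep s Hs)).
Qed.

Lemma dtv_is_poly2 s : 0 < s -> is_poly2 k (dtv v s i j m).
Proof.
  intros Hs. exists (fun p q => Derive (fun r => c r i j m p q) s). intros x z.
  rewrite dtv_lincomb2, poly2_lincomb2; auto.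
Qed.

Variable t : R.
Hypothesis Ht : 0 < t.

Lemma v_is_derive_sep_t : is_derive_sep t (fun r => v r i j m) (dtv v t i j m).
Proof.
  eapply is_derive_sep_ext; [now apply v_is_derive_sep|exists (mkposreal 1 Rlt_0_1); intros; reflexivity|].
  intros; symmetry; now apply dtv_lincomb2.
Qed.

Lemma dtv_is_derive_sep_t : is_derive_sep t (fun r => dtv v r i j m) (dttv v t i j m).
Proof.
  assert (HR : is_derive_sep t (fun r => dtv v r i j m)
      (lincomb2 k (fun p q => Derive (fun r => Derive (fun r' => c r' i j m p q) r) t) monomial)).
  { eapply is_derive_sep_ext.
    - apply (is_derive_sep_lincomb2 t k (fun p q r => Derive (fun r' => c r' i j m p q) r));
        [intros p q; exact (proj2 (Hvd t i j m p q Ht))|apply continuous2_monomial].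
    - exists (mkposreal t Ht). intros r Hr x z. simpl in Hr. pose proof (Rabs_def2 _ _ Hr).
      rewrite dtv_lincomb2 by lra. reflexivity.
    - intros; reflexivity. }
  eapply is_derive_sep_ext; [apply HR|exists (mkposreal 1 Rlt_0_1); intros; reflexivity|].
  intros x z. symmetry. apply is_derive_unique, (is_derive_sep_pt _ _ _ x z HR).
Qed.

End Velocity.

Ltac continuity2 :=
  repeat first [ apply continuous2_const | apply continuous2_plus | apply continuous2_minus
               | apply continuous2_mult | apply continuous2_sumR; intros ].

Ltac sep_derive :=
  repeat first [ apply is_derive_sep_plus | apply is_derive_sep_sumR; intros
               | apply is_derive_sep_mult_r | apply is_derive_sep_mult_l | apply is_derive_sep_const ].

Definition is_test (W : nat -> nat -> R -> R -> R) : Prop :=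
  forall m d, (m < M)%nat -> (d < 2)%nat -> is_poly2 k (W m d).

Ltac test_leaf := first
  [ apply coef_continuous2 | apply coef_grad_continuous2
  | match goal with HW : is_test ?W |- _ => first
      [ apply continuous2_poly2_pdx with k, HW | apply continuous2_poly2_pdz with k, HW
      | apply is_poly2_continuous2 with k, HW ] end ];
  (assumption || lia).

Definition S_dot s i j (W : nat -> nat -> R -> R -> R) (x z : R) : R :=
  sumR M (fun m => sumR 2 (fun d => Sh s i j m d x z * W m d x z)).

Definition eq2_volume (vv : nat -> nat -> nat -> R -> R -> R) (W : nat -> nat -> R -> R -> R) i j x z :=
  sumR M (fun m => sumR M (fun l => a i j m l x z * vv i j l x z)
                   * (pdx (W m 0%nat) x z + pdz (W m 1%nat) x z))
  + sumR M (fun m => sumR 2 (fun d => sumR M (fun l => vv i j l x z * grad d (a i j m l) x z) * W m d x z)).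

Lemma continuous2_S_dot s i j W : 0 < s -> cell i j -> is_test W -> continuous2 (S_dot s i j W).
Proof.
  intros Hs [Hi Hj] HW. unfold S_dot. continuity2.
  all: apply is_poly2_continuous2 with k; first [apply HS | apply HW]; auto.
Qed.

Lemma continuous2_eq2_volume vv W i j : cell i j -> is_test W ->
  (forall l, (l < M)%nat -> continuous2 (vv i j l)) -> continuous2 (eq2_volume vv W i j).
Proof.
  intros Hij HW Hv. unfold eq2_volume. continuity2.
  all: first [ now apply Hv | test_leaf ].
Qed.

Lemma eq2_S_dot s i j W : 0 < s -> cell i j -> is_test W ->
  cellint i j (S_dot s i j W) = bnd2 M Nx Nz xs zs a (v s) i j W - cellint i j (eq2_volume (v s) W i j).
Proof.
  intros Hs Hij HW. pose proof Hij as [Hi Hj]. destruct (cell_bounds i j Hij) as [Hx Hz].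
  pose proof (Heq2 s i j (fun _ _ => W) Hs Hi Hj (fun _ _ m d _ _ Hm Hd => HW m d Hm Hd)) as H.
  unfold ldg_eq2 in H.
  rewrite (cint_ext _ _ _ _ Hx Hz _ (fun x z => S_dot s i j W x z + eq2_volume (v s) W i j x z)) in H
    by (intros; unfold S_dot, eq2_volume; ring).
  rewrite cint_plus in H; auto.
  - unfold cellint. lra.
  - now apply continuous2_S_dot.
  - apply continuous2_eq2_volume; auto. intros. now apply is_poly2_continuous2 with k, v_is_poly2.
Qed.

Variable t : R.
Hypothesis Ht : 0 < t.

Lemma eq2_volume_is_derive_sep i j W : cell i j -> is_test W ->
  is_derive_sep t (fun s => eq2_volume (v s) W i j) (eq2_volume (dtv v t) W i j).
Proof.
  intros Hij HW. unfold eq2_volume. sep_derive.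
  all: try (apply v_is_derive_sep_t; auto).
  all: continuity2; test_leaf.
Qed.

Lemma Av_dot_is_derive_sep i j d W (VV : R -> nat -> R -> R -> R) VV' :
  cell i j -> is_test W -> (d < 2)%nat ->
  (forall l, (l < M)%nat -> is_derive_sep t (fun s => VV s l) (VV' l)) ->
  is_derive_sep t (fun s x z => Av_dot M (a i j) (VV s) d x z W) (fun x z => Av_dot M (a i j) VV' d x z W).
Proof.
  intros Hij HW Hd HV. unfold Av_dot. sep_derive.
  all: first [ now apply HV | test_leaf ].
Qed.

Lemma neighbour_is_derive_sep (b : bool) i j l : (b = true -> cell i j) -> (l < M)%nat ->
  is_derive_sep t (fun s => (if b then v s i j else zero3) l) ((if b then dtv v t i j else zero3) l).
Proof.
  intros Hb Hl. destruct b.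
  - specialize (Hb eq_refl). now apply v_is_derive_sep_t.
  - apply is_derive_sep_const, continuous2_const.
Qed.

Lemma is_derive_bnd2 i j W : cell i j -> is_test W ->
  is_derive (fun s => bnd2 M Nx Nz xs zs a (v s) i j W) t (bnd2 M Nx Nz xs zs a (dtv v t) i j W).
Proof.
  intros Hij HW. pose proof Hij as [Hi Hj].
  set (Av := fun d (VV : R -> nat -> R -> R -> R) s x z => Av_dot M (a i j) (VV s) d x z W).
  set (Av' := fun d (VV : nat -> R -> R -> R) x z => Av_dot M (a i j) VV d x z W).
  set (nb := fun (b : bool) i' j' s => if b then v s i' j' else zero3).
  set (nb' := fun (b : bool) i' j' => if b then dtv v t i' j' else zero3).
  assert (Hnb : forall b i' j' d, (b = true -> cell i' j') -> (d < 2)%nat ->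
            is_derive_sep t (Av d (nb b i' j')) (Av' d (nb' b i' j'))).
  { intros. apply Av_dot_is_derive_sep; auto. intros. now apply neighbour_is_derive_sep. }
  unfold bnd2. cbv zeta. apply is_derive_plusR.
  - apply (is_derive_sep_RInt_snd_diff t (Av 0%nat (nb (Nat.ltb (S i) Nx) (S i) j))
             (Av' 0%nat (nb' (Nat.ltb (S i) Nx) (S i) j)) (Av 0%nat (nb (Nat.ltb 0 i) i j))
             (Av' 0%nat (nb' (Nat.ltb 0 i) i j)) (xs (S i)) (xs i));
      apply Hnb; try lia; intros Hb; try apply Nat.ltb_lt in Hb; split; lia.
  - apply (is_derive_sep_RInt_fst_diff t (Av 1%nat (nb (Nat.ltb (S j) Nz) i (S j)))
             (Av' 1%nat (nb' (Nat.ltb (S j) Nz) i (S j))) (Av 1%nat (nb (Nat.ltb 0 j) i j))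
             (Av' 1%nat (nb' (Nat.ltb 0 j) i j)) (zs (S j)) (zs j));
      apply Hnb; try lia; intros Hb; try apply Nat.ltb_lt in Hb; split; lia.
Qed.

Lemma is_derive_S_dot i j W : cell i j -> is_test W ->
  is_derive (fun s => cellint i j (S_dot s i j W)) t
    (bnd2 M Nx Nz xs zs a (dtv v t) i j W - cellint i j (eq2_volume (dtv v t) W i j)).
Proof.
  intros Hij HW. destruct (cell_bounds i j Hij) as [Hx Hz].
  apply (is_derive_near _ (fun s => bnd2 M Nx Nz xs zs a (v s) i j W - cellint i j (eq2_volume (v s) W i j))
           t (mkposreal t Ht)).
  { intros s Hs. simpl in Hs. pose proof (Rabs_def2 _ _ Hs). symmetry. apply eq2_S_dot; auto. lra. }
  apply is_derive_minusR; [now apply is_derive_bnd2|].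
  apply (is_derive_sep_cint t (fun s => eq2_volume (v s) W i j)); auto.
  now apply eq2_volume_is_derive_sep.
Qed.

Lemma Sh_is_test s i j : 0 < s -> cell i j -> is_test (Sh s i j).
Proof. intros Hs [Hi Hj] m d Hm Hd. now apply HS. Qed.

Definition unit_test (m d r : nat) : nat -> nat -> R -> R -> R :=
  fun m' d' => if andb (Nat.eqb m' m) (Nat.eqb d' d) then poly2_basis k r else (fun _ _ => 0).

Lemma unit_test_is_test m d r : is_test (unit_test m d r).
Proof.
  intros m' d' _ _. unfold unit_test.
  destruct (andb _ _); [apply poly2_basis_is_poly2|apply is_poly2_zero].
Qed.

Lemma S_dot_unit_test s i j m d r x z : (m < M)%nat -> (d < 2)%nat ->
  S_dot s i j (unit_test m d r) x z = Sh s i j m d x z * poly2_basis k r x z.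
Proof.
  intros Hm Hd. unfold S_dot, unit_test.
  rewrite (sumR_ext M _ (fun m' => if Nat.eqb m' m
            then sumR 2 (fun d' => if Nat.eqb d' d then Sh s i j m' d' x z * poly2_basis k r x z else 0)
            else 0)).
  - now rewrite !sumR_kronecker.
  - intros m' _. destruct (Nat.eqb m' m).
    + apply sumR_ext; intros d' _. destruct (Nat.eqb d' d); simpl; ring.
    + apply sumR_eq0; intros d' _. simpl. ring.
Qed.

Definition strain_energy i j s : R :=
  cellint i j (fun x z => sumR M (fun m => sumR 2 (fun d => Sh s i j m d x z * Sh s i j m d x z))).

Section Strain.
Variables (i j : nat).
Hypothesis Hij : cell i j.

Definition S_moment m d r s : R := cellint i j (fun x z => Sh s i j m d x z * poly2_basis k r x z).

Lemma ex_derive_S_moment m d r : (m < M)%nat -> (d < 2)%nat -> ex_derive (S_moment m d r) t.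
Proof.
  intros Hm Hd. destruct (cell_bounds i j Hij) as [Hx Hz].
  eexists. apply (is_derive_near _ (fun s => cellint i j (S_dot s i j (unit_test m d r))) t (mkposreal t Ht)).
  - intros s _. apply cint_ext; auto. intros. now apply S_dot_unit_test.
  - apply is_derive_S_dot; auto. apply unit_test_is_test.
Qed.

Definition strain_gap s : R :=
  cellint i j (fun x z => sumR M (fun m => sumR 2 (fun d =>
    (Sh s i j m d x z - Sh t i j m d x z) * (Sh s i j m d x z - Sh t i j m d x z)))).

Lemma continuous2_Sh s m d : 0 < s -> (m < M)%nat -> (d < 2)%nat -> continuous2 (Sh s i j m d).
Proof. intros. apply is_poly2_continuous2 with k. now apply Sh_is_test. Qed.

Lemma continuous2_Sh_gap s m d : 0 < s -> (m < M)%nat -> (d < 2)%nat ->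
  continuous2 (fun x z => (Sh s i j m d x z - Sh t i j m d x z) * (Sh s i j m d x z - Sh t i j m d x z)).
Proof. intros. apply continuous2_mult; apply continuous2_minus; now apply continuous2_Sh. Qed.

Lemma strain_gap_sumR s : 0 < s ->
  strain_gap s = sumR M (fun m => sumR 2 (fun d => cellint i j (fun x z =>
    (Sh s i j m d x z - Sh t i j m d x z) * (Sh s i j m d x z - Sh t i j m d x z)))).
Proof.
  intros Hs. destruct (cell_bounds i j Hij) as [Hx Hz]. unfold strain_gap, cellint.
  rewrite (cint_sumR _ _ _ _ Hz) by (intros; apply continuous2_sumR; intros; now apply continuous2_Sh_gap).
  apply sumR_ext; intros. apply (cint_sumR _ _ _ _ Hz). intros; now apply continuous2_Sh_gap.
Qed.

Lemma strain_gap_ge0 s : 0 < s -> 0 <= strain_gap s.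
Proof.
  intros Hs. destruct (cell_bounds i j Hij) as [Hx Hz]. rewrite strain_gap_sumR by exact Hs.
  apply sumR_ge0; intros m Hm; apply sumR_ge0; intros d Hd.
  apply cint_ge0; auto using continuous2_Sh_gap. intros; apply Rle_0_sqr.
Qed.

(* [S s - S t] is a polynomial, so its L2 norm is controlled by its moments. *)
Lemma strain_gap_le_moments : exists C, 0 <= C /\ forall s, 0 < s ->
  strain_gap s <= C * sumR M (fun m => sumR 2 (fun d => sumR (S k * S k) (fun r =>
                        (S_moment m d r s - S_moment m d r t) ^ 2))).
Proof.
  destruct (cell_bounds i j Hij) as [Hx Hz]. pose proof Hij as [Hi Hj].
  destruct (cint_sq_le_moments (xs i) (xs (S i)) (zs j) (zs (S j)) k Hx Hz) as [C [HC HB]].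
  exists C. split; [exact HC|]. intros s Hs.
  rewrite strain_gap_sumR, <- sumR_scal_l by exact Hs. apply sumR_le; intros m Hm.
  rewrite <- sumR_scal_l. apply sumR_le; intros d Hd.
  eapply Rle_trans; [apply HB, is_poly2_minus; now apply HS|].
  right. apply Rmult_eq_compat_l. apply sumR_ext; intros r Hr.
  apply (f_equal (fun u => u ^ 2)). unfold S_moment, cellint.
  rewrite <- cint_minus; auto.
  - apply cint_ext; auto. intros; ring.
  - apply continuous2_mult; [now apply continuous2_Sh|apply continuous2_poly2_basis].
  - apply continuous2_mult; [now apply continuous2_Sh|apply continuous2_poly2_basis].
Qed.

(* The moments are differentiable in time, so their squared increments vanish to second order. *)
Lemma is_derive_strain_gap : is_derive strain_gap t 0.
Proof.
  destruct strain_gap_le_moments as [C [HC HB]].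
  set (h := fun s => C * sumR M (fun m => sumR 2 (fun d => sumR (S k * S k) (fun r =>
                (S_moment m d r s - S_moment m d r t) ^ 2)))).
  apply (is_derive_squeeze0 strain_gap h t (mkposreal t Ht)).
  - unfold h. eapply is_derive_eq.
    + apply is_derive_scal. apply is_derive_sumR; intros m Hm. apply is_derive_sumR; intros d Hd.
      apply is_derive_sumR; intros r Hr.
      apply (is_derive_pow (fun s => S_moment m d r s - S_moment m d r t)).
      apply is_derive_minusR; [apply Derive_correct, ex_derive_S_moment; auto|apply is_derive_constR].
    + rewrite sumR_eq0; [ring|]. intros; apply sumR_eq0; intros; apply sumR_eq0; intros.
      rewrite Rminus_diag. simpl. ring.
  - unfold h. rewrite sumR_eq0; [ring|]. intros; apply sumR_eq0; intros; apply sumR_eq0; intros.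
    rewrite Rminus_diag. ring.
  - rewrite strain_gap_sumR by exact Ht. apply sumR_eq0; intros; apply sumR_eq0; intros.
    destruct (cell_bounds i j Hij) as [Hx Hz]. unfold cellint.
    rewrite (cint_ext _ _ _ _ Hx Hz _ (fun _ _ => 0 * 0)) by (intros; rewrite Rminus_diag; ring).
    rewrite (cint_scal _ _ _ _ Hz 0 (fun _ _ => 0)); [ring|apply continuous2_const].
  - intros s Hs. simpl in Hs. pose proof (Rabs_def2 _ _ Hs) as [Hs1 Hs2].
    rewrite Rabs_pos_eq; [apply HB|apply strain_gap_ge0]; lra.
Qed.

Definition S_pairing s : R := cellint i j (S_dot s i j (Sh t i j)).

Lemma strain_energy_split s : 0 < s -> strain_energy i j s = strain_gap s + 2 * S_pairing s - S_pairing t.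
Proof.
  intros Hs. destruct (cell_bounds i j Hij) as [Hx Hz].
  assert (Hpair : forall s', 0 < s' -> continuous2 (S_dot s' i j (Sh t i j)))
    by (intros; apply continuous2_S_dot; auto; now apply Sh_is_test).
  assert (Hgap : continuous2 (fun x z => sumR M (fun m => sumR 2 (fun d =>
                   (Sh s i j m d x z - Sh t i j m d x z) * (Sh s i j m d x z - Sh t i j m d x z)))))
    by (apply continuous2_sumR; intros; apply continuous2_sumR; intros; now apply continuous2_Sh_gap).
  assert (H2pair : continuous2 (fun x z => 2 * S_dot s i j (Sh t i j) x z))
    by (apply continuous2_mult; [apply continuous2_const|auto]).
  unfold strain_energy, strain_gap, S_pairing, cellint.
  rewrite <- (cint_scal _ _ _ _ Hz), <- (cint_plus _ _ _ _ Hz _ _ Hgap H2pair),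
    <- (cint_minus _ _ _ _ Hz); auto.
  - apply cint_ext; auto. intros x z _ _. unfold S_dot.
    rewrite <- !sumR_scal_l, <- !sumR_plus, <- !sumR_minus. apply sumR_ext; intros.
    rewrite <- !sumR_scal_l, <- !sumR_plus, <- !sumR_minus. apply sumR_ext; intros. ring.
  - now apply continuous2_plus.
Qed.

Lemma is_derive_strain_energy :
  is_derive (strain_energy i j) t
    (2 * (bnd2 M Nx Nz xs zs a (dtv v t) i j (Sh t i j) - cellint i j (eq2_volume (dtv v t) (Sh t i j) i j))).
Proof.
  apply (is_derive_near _ (fun s => strain_gap s + 2 * S_pairing s - S_pairing t) t (mkposreal t Ht)).
  { intros s Hs. simpl in Hs. pose proof (Rabs_def2 _ _ Hs). symmetry. apply strain_energy_split. lra. }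
  pose proof (is_derive_S_dot i j (Sh t i j) Hij (Sh_is_test t i j Ht Hij)) as Hpair.
  eapply is_derive_eq.
  - apply is_derive_minusR; [apply is_derive_plusR|apply is_derive_constR].
    + apply is_derive_strain_gap.
    + apply is_derive_scal. exact Hpair.
  - ring.
Qed.

End Strain.

Definition kinetic_energy i j s : R :=
  cellint i j (fun x z => sumR M (fun m => dtv v s i j m x z * dtv v s i j m x z)).

Definition stress_grad i j x z : R :=
  sumR M (fun m => sumR 2 (fun d =>
    sumR M (fun l => a i j m l x z * Sh t i j l d x z) * grad d (dtv v t i j m) x z)).

Lemma continuous2_Av_dot i j vv d W : cell i j ->
  (forall l, (l < M)%nat -> continuous2 (vv l)) -> (forall p, (p < M)%nat -> continuous2 (W p d)) ->
  continuous2 (fun x z => Av_dot M (a i j) vv d x z W).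
Proof.
  intros Hij Hv HW. apply (continuous2_bform M (a i j) vv (fun p => W p d)); auto.
  intros; now apply coef_continuous2.
Qed.

Lemma continuous2_AS_dot i j Sm d q : cell i j ->
  (forall l, (l < M)%nat -> continuous2 (Sm l d)) -> (forall p, (p < M)%nat -> continuous2 (q p)) ->
  continuous2 (fun x z => AS_dot M (a i j) Sm d x z q).
Proof.
  intros Hij HS' Hq. apply (continuous2_bform M (a i j) (fun l => Sm l d) q); auto.
  intros; now apply coef_continuous2.
Qed.

Lemma continuous2_dtv i j m : cell i j -> (m < M)%nat -> continuous2 (dtv v t i j m).
Proof. intros. now apply is_poly2_continuous2 with k, dtv_is_poly2. Qed.

Lemma continuous2_neighbour (b : bool) i j l : (b = true -> cell i j) -> (l < M)%nat ->
  continuous2 ((if b then dtv v t i j else zero3) l).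
Proof.
  intros Hb Hl. destruct b; [|apply continuous2_const].
  destruct (Hb eq_refl). now apply is_poly2_continuous2 with k, dtv_is_poly2.
Qed.

Lemma AS_dot_eq_Av_dot i j Sm d x z q : cell i j -> xs i <= x <= xs (S i) -> zs j <= z <= zs (S j) ->
  AS_dot M (a i j) Sm d x z q = Av_dot M (a i j) q d x z Sm.
Proof.
  intros [Hi Hj] Hx Hz. rewrite AS_dot_bform, Av_dot_bform. apply bform_sym. intros; now apply Hsym.
Qed.

(* [A^- dtv^+ . S^- nu] on the right edge of cell [(i, j)]; it vanishes on the last column by the
   Dirichlet condition. *)
Definition flux_x i j : R :=
  RInt (fun z => Av_dot M (a i j) (if Nat.ltb (S i) Nx then dtv v t (S i) j else zero3) 0 (xs (S i)) z (Sh t i j))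
       (zs j) (zs (S j)).

Definition flux_z i j : R :=
  RInt (fun x => Av_dot M (a i j) (if Nat.ltb (S j) Nz then dtv v t i (S j) else zero3) 1 x (zs (S j)) (Sh t i j))
       (xs i) (xs (S i)).

Ltac ex_RInt_edges :=
  cbv beta; repeat match goal with
  | |- ex_RInt (fun y => @?f y - @?g y) _ _ => apply (ex_RInt_minusR f g)
  | |- ex_RInt (fun z => AS_dot M ?A ?Sm ?d ?x z ?q) _ _ =>
      apply (ex_RInt_section_snd (fun x' z => AS_dot M A Sm d x' z q) x)
  | |- ex_RInt (fun z => Av_dot M ?A ?vv ?d ?x z ?W) _ _ =>
      apply (ex_RInt_section_snd (fun x' z => Av_dot M A vv d x' z W) x)
  | |- ex_RInt (fun x => AS_dot M ?A ?Sm ?d x ?z ?q) _ _ =>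
      apply (ex_RInt_section_fst (fun x z' => AS_dot M A Sm d x z' q) z)
  | |- ex_RInt (fun x => Av_dot M ?A ?vv ?d x ?z ?W) _ _ =>
      apply (ex_RInt_section_fst (fun x z' => Av_dot M A vv d x z' W) z)
  | |- continuous2 (fun x z => AS_dot M _ _ _ x z _) => apply continuous2_AS_dot; intros
  | |- continuous2 (fun x z => Av_dot M _ _ _ x z _) => apply continuous2_Av_dot; intros
  end.

Lemma RInt_combine3 (f g h e : R -> R) x0 x1 :
  ex_RInt f x0 x1 -> ex_RInt g x0 x1 -> ex_RInt h x0 x1 ->
  (forall x, Rmin x0 x1 < x < Rmax x0 x1 -> f x + g x - h x = e x) ->
  RInt f x0 x1 + RInt g x0 x1 - RInt h x0 x1 = RInt e x0 x1.
Proof.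
  intros Hf Hg Hh He. rewrite <- RInt_plusR, <- RInt_minusR by auto using ex_RInt_plusR.
  now apply RInt_ext.
Qed.

Section Cell.
Variables (i j : nat).
Hypothesis Hij : cell i j.

Lemma continuous2_dttv m : (m < M)%nat -> continuous2 (dttv v t i j m).
Proof. intros. now apply (is_derive_sep_continuous2 t (fun r => dtv v r i j m)), dtv_is_derive_sep_t. Qed.

Lemma continuous2_stress_grad : continuous2 (stress_grad i j).
Proof.
  pose proof Hij as [Hi Hj]. unfold stress_grad. continuity2.
  all: first [ apply coef_continuous2 | apply is_poly2_continuous2 with k, HS
             | apply continuous2_poly2_pdx with k, dtv_is_poly2
             | apply continuous2_poly2_pdz with k, dtv_is_poly2 ]; (assumption || lia).
Qed.

Lemma is_derive_kinetic_energy :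
  is_derive (kinetic_energy i j) t (2 * (bnd1 M xs zs a (Sh t) i j (dtv v t i j) - cellint i j (stress_grad i j))).
Proof.
  destruct (cell_bounds i j Hij) as [Hx Hz]. pose proof Hij as [Hi Hj].
  assert (Hkin : continuous2 (fun x z => sumR M (fun m => dttv v t i j m x z * dtv v t i j m x z))).
  { apply continuous2_sumR; intros. apply continuous2_mult; [apply continuous2_dttv|apply continuous2_dtv]; auto. }
  eapply is_derive_eq.
  - apply (is_derive_sep_cint t (fun s x z => sumR M (fun m => dtv v s i j m x z * dtv v s i j m x z))); auto.
    apply is_derive_sep_sumR. intros m Hm.
    apply (is_derive_sep_mult t (fun r => dtv v r i j m) (dttv v t i j m)
                                (fun r => dtv v r i j m) (dttv v t i j m));
      now apply dtv_is_derive_sep_t.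
  - pose proof (Heq1 t i j (fun i' j' => dtv v t i' j') Ht Hi Hj
                  (fun i' j' m Hi' Hj' Hm => dtv_is_poly2 i' j' m (conj Hi' Hj') Hm t Ht)) as Heq.
    unfold ldg_eq1 in Heq. rewrite (cint_plus _ _ _ _ Hz _ _ Hkin continuous2_stress_grad) in Heq.
    rewrite (cint_ext _ _ _ _ Hx Hz _ (fun x z => 2 * sumR M (fun m => dttv v t i j m x z * dtv v t i j m x z)))
      by (intros; rewrite <- sumR_scal_l; apply sumR_ext; intros; ring).
    rewrite (cint_scal _ _ _ _ Hz _ _ Hkin). unfold cellint. lra.
Qed.

Definition edge_flux d x z : R := Av_dot M (a i j) (dtv v t i j) d x z (Sh t i j).

Definition edge_flux_grad d x z : R :=
  bform M (fun p q => grad d (a i j p q) x z) (fun l => dtv v t i j l x z) (fun p => Sh t i j p d x z)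
  + bform M (fun p q => a i j p q x z) (fun l => grad d (dtv v t i j l) x z) (fun p => Sh t i j p d x z)
  + bform M (fun p q => a i j p q x z) (fun l => dtv v t i j l x z) (fun p => grad d (Sh t i j p d) x z).

Lemma is_derive_edge_flux_x x z : is_derive (fun y => edge_flux 0 y z) x (edge_flux_grad 0 x z).
Proof.
  pose proof Hij as [Hi Hj].
  apply (is_derive_bform M (fun p q y => a i j p q y z) (fun l y => dtv v t i j l y z) (fun p y => Sh t i j p 0 y z)
           (fun p q => pdx (a i j p q) x z) (fun l => pdx (dtv v t i j l) x z) (fun p => pdx (Sh t i j p 0) x z)).
  - intros. now apply is_derive_coef_x.
  - intros. now apply is_derive_poly2_pdx with k, dtv_is_poly2.
  - intros. apply is_derive_poly2_pdx with k, HS; auto; lia.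
Qed.

Lemma is_derive_edge_flux_z x z : is_derive (fun y => edge_flux 1 x y) z (edge_flux_grad 1 x z).
Proof.
  pose proof Hij as [Hi Hj].
  apply (is_derive_bform M (fun p q y => a i j p q x y) (fun l y => dtv v t i j l x y) (fun p y => Sh t i j p 1 x y)
           (fun p q => pdz (a i j p q) x z) (fun l => pdz (dtv v t i j l) x z) (fun p => pdz (Sh t i j p 1) x z)).
  - intros. now apply is_derive_coef_z.
  - intros. now apply is_derive_poly2_pdz with k, dtv_is_poly2.
  - intros. apply is_derive_poly2_pdz with k, HS; auto; lia.
Qed.

Lemma continuous2_edge_flux d : (d < 2)%nat -> continuous2 (edge_flux d).
Proof.
  pose proof Hij as [Hi Hj]. intros Hd.
  apply (continuous2_bform M (fun p q => a i j p q) (fun l => dtv v t i j l) (fun p => Sh t i j p d)).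
  - intros. now apply coef_continuous2.
  - intros; now apply continuous2_dtv.
  - intros. now apply is_poly2_continuous2 with k, HS.
Qed.

Lemma continuous2_edge_flux_grad d : (d < 2)%nat -> continuous2 (edge_flux_grad d).
Proof.
  pose proof Hij as [Hi Hj]. intros Hd. unfold edge_flux_grad.
  repeat apply continuous2_plus; apply continuous2_bform; intros.
  all: first [ apply coef_continuous2 | apply coef_grad_continuous2 | apply continuous2_dtv
             | apply is_poly2_continuous2 with k, HS
             | destruct d; [apply continuous2_poly2_pdx with k | apply continuous2_poly2_pdz with k];
               first [apply dtv_is_poly2 | apply HS] ]; (assumption || lia).
Qed.

Lemma volume_divergence x z : xs i <= x <= xs (S i) -> zs j <= z <= zs (S j) ->
  stress_grad i j x z + eq2_volume (dtv v t) (Sh t i j) i j x z = edge_flux_grad 0 x z + edge_flux_grad 1 x z.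
Proof.
  intros Hx Hz. pose proof Hij as [Hi Hj].
  set (A := fun p q => a i j p q x z).
  assert (HA : forall p q, (p < M)%nat -> (q < M)%nat -> A p q = A q p) by (intros; now apply Hsym).
  set (q := fun l => dtv v t i j l x z).
  set (Sd := fun d p => Sh t i j p d x z).
  assert (Hstress : stress_grad i j x z
    = bform M A (fun l => pdx (dtv v t i j l) x z) (Sd 0%nat) + bform M A (fun l => pdz (dtv v t i j l) x z) (Sd 1%nat)).
  { unfold stress_grad. rewrite sumR_swap, sumR_2.
    rewrite !(bform_sym M A _ (Sd _)) by exact HA. reflexivity. }
  assert (Hvol : eq2_volume (dtv v t) (Sh t i j) i j x z
    = bform M A q (fun p => pdx (Sh t i j p 0) x z) + bform M A q (fun p => pdz (Sh t i j p 1) x z)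
      + bform M (fun p l => pdx (a i j p l) x z) q (Sd 0%nat) + bform M (fun p l => pdz (a i j p l) x z) q (Sd 1%nat)).
  { unfold eq2_volume, bform. rewrite Rplus_assoc, <- !sumR_plus.
    apply sumR_ext; intros m Hm. rewrite sumR_2. simpl grad.
    rewrite (sumR_ext M (fun l => dtv v t i j l x z * pdx (a i j m l) x z) (fun l => pdx (a i j m l) x z * q l)),
      (sumR_ext M (fun l => dtv v t i j l x z * pdz (a i j m l) x z) (fun l => pdz (a i j m l) x z * q l))
      by (intros; unfold q; ring).
    unfold A, q, Sd. ring. }
  rewrite Hstress, Hvol. unfold edge_flux_grad. simpl grad. fold A q.
  change (fun p => Sh t i j p 0%nat x z) with (Sd 0%nat). change (fun p => Sh t i j p 1%nat x z) with (Sd 1%nat).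
  ring.
Qed.

Lemma cell_divergence :
  cellint i j (fun x z => stress_grad i j x z + eq2_volume (dtv v t) (Sh t i j) i j x z)
  = RInt (fun z => edge_flux 0 (xs (S i)) z - edge_flux 0 (xs i) z) (zs j) (zs (S j))
    + RInt (fun x => edge_flux 1 x (zs (S j)) - edge_flux 1 x (zs j)) (xs i) (xs (S i)).
Proof.
  destruct (cell_bounds i j Hij) as [Hx Hz]. unfold cellint.
  rewrite (cint_ext _ _ _ _ Hx Hz _ (fun x z => edge_flux_grad 0 x z + edge_flux_grad 1 x z))
    by (intros; now apply volume_divergence).
  rewrite (cint_plus _ _ _ _ Hz) by (apply continuous2_edge_flux_grad; lia).
  rewrite (cint_FTC_x _ _ _ _ Hz (edge_flux 0)), (cint_FTC_z _ _ _ _ (edge_flux 1)).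
  - reflexivity.
  - apply is_derive_edge_flux_z.
  - apply continuous2_edge_flux_grad; lia.
  - apply is_derive_edge_flux_x.
  - apply continuous2_edge_flux_grad; lia.
  - apply continuous2_edge_flux; lia.
Qed.

End Cell.

Ltac edge_leaf := first
  [ assumption | apply continuous2_const | apply is_poly2_continuous2 with k, HS | apply continuous2_dtv
  | apply continuous2_neighbour; [intros Hb; try apply Nat.ltb_lt in Hb; split|] ];
  (assumption || lia).

Lemma edge_balance_x i j : cell i j ->
  RInt (fun z => AS_dot M (a i j) (Sh t i j) 0 (xs (S i)) z (dtv v t i j)
               - AS_dot M (a (pred i) j) (Sh t (pred i) j) 0 (xs i) z (dtv v t i j)) (zs j) (zs (S j))
  + RInt (fun z => Av_dot M (a i j) (if Nat.ltb (S i) Nx then dtv v t (S i) j else zero3) 0 (xs (S i)) z (Sh t i j)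
                 - Av_dot M (a i j) (if Nat.ltb 0 i then dtv v t i j else zero3) 0 (xs i) z (Sh t i j))
         (zs j) (zs (S j))
  - RInt (fun z => edge_flux i j 0 (xs (S i)) z - edge_flux i j 0 (xs i) z) (zs j) (zs (S j))
  = flux_x i j - (if Nat.ltb 0 i then flux_x (pred i) j else 0).
Proof.
  intros Hij. pose proof Hij as [Hi Hj]. destruct (cell_bounds i j Hij) as [Hx Hz].
  unfold edge_flux, flux_x. destruct i as [|i'].
  - replace (Nat.ltb 0 0) with false by reflexivity. simpl pred. rewrite Rminus_0_r.
    apply RInt_combine3; try (ex_RInt_edges; edge_leaf).
    intros z Hz'. rewrite Rmin_left, Rmax_right in Hz' by lra.
    rewrite !(AS_dot_eq_Av_dot 0 j), Av_dot_zero3 by (auto; lra). ring.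
  - replace (Nat.ltb 0 (S i')) with true by reflexivity. simpl pred.
    assert (Hi' : cell i' j) by (split; lia).
    pose proof (proj1 (cell_bounds i' j Hi')) as Hxi'.
    replace (Nat.ltb (S i') Nx) with true by (symmetry; apply Nat.ltb_lt; lia).
    rewrite <- RInt_minusR by (ex_RInt_edges; edge_leaf).
    apply RInt_combine3; try (ex_RInt_edges; edge_leaf).
    intros z Hz'. rewrite Rmin_left, Rmax_right in Hz' by lra.
    rewrite (AS_dot_eq_Av_dot (S i') j), (AS_dot_eq_Av_dot i' j) by (auto; lra). ring.
Qed.

Lemma edge_balance_z i j : cell i j ->
  RInt (fun x => AS_dot M (a i j) (Sh t i j) 1 x (zs (S j)) (dtv v t i j)
               - AS_dot M (a i (pred j)) (Sh t i (pred j)) 1 x (zs j) (dtv v t i j)) (xs i) (xs (S i))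
  + RInt (fun x => Av_dot M (a i j) (if Nat.ltb (S j) Nz then dtv v t i (S j) else zero3) 1 x (zs (S j)) (Sh t i j)
                 - Av_dot M (a i j) (if Nat.ltb 0 j then dtv v t i j else zero3) 1 x (zs j) (Sh t i j))
         (xs i) (xs (S i))
  - RInt (fun x => edge_flux i j 1 x (zs (S j)) - edge_flux i j 1 x (zs j)) (xs i) (xs (S i))
  = flux_z i j - (if Nat.ltb 0 j then flux_z i (pred j) else 0).
Proof.
  intros Hij. pose proof Hij as [Hi Hj]. destruct (cell_bounds i j Hij) as [Hx Hz].
  unfold edge_flux, flux_z. destruct j as [|j'].
  - replace (Nat.ltb 0 0) with false by reflexivity. simpl pred. rewrite Rminus_0_r.
    apply RInt_combine3; try (ex_RInt_edges; edge_leaf).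
    intros x Hx'. rewrite Rmin_left, Rmax_right in Hx' by lra.
    rewrite !(AS_dot_eq_Av_dot i 0), Av_dot_zero3 by (auto; lra). ring.
  - replace (Nat.ltb 0 (S j')) with true by reflexivity. simpl pred.
    assert (Hj' : cell i j') by (split; lia).
    pose proof (proj2 (cell_bounds i j' Hj')) as Hzj'.
    replace (Nat.ltb (S j') Nz) with true by (symmetry; apply Nat.ltb_lt; lia).
    rewrite <- RInt_minusR by (ex_RInt_edges; edge_leaf).
    apply RInt_combine3; try (ex_RInt_edges; edge_leaf).
    intros x Hx'. rewrite Rmin_left, Rmax_right in Hx' by lra.
    rewrite (AS_dot_eq_Av_dot i (S j')), (AS_dot_eq_Av_dot i j') by (auto; lra). ring.
Qed.

Lemma cell_energy_rate i j : cell i j ->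
  2 * (bnd1 M xs zs a (Sh t) i j (dtv v t i j) - cellint i j (stress_grad i j))
  + 2 * (bnd2 M Nx Nz xs zs a (dtv v t) i j (Sh t i j) - cellint i j (eq2_volume (dtv v t) (Sh t i j) i j))
  = 2 * ((flux_x i j - (if Nat.ltb 0 i then flux_x (pred i) j else 0))
         + (flux_z i j - (if Nat.ltb 0 j then flux_z i (pred j) else 0))).
Proof.
  intros Hij. destruct (cell_bounds i j Hij) as [Hx Hz].
  rewrite <- edge_balance_x, <- edge_balance_z by exact Hij.
  pose proof (cell_divergence i j Hij) as Hdiv. unfold cellint in *.
  rewrite (cint_plus _ _ _ _ Hz) in Hdiv.
  - unfold bnd1, bnd2. cbv zeta. lra.
  - now apply continuous2_stress_grad.
  - apply continuous2_eq2_volume; [exact Hij|now apply Sh_is_test|intros; now apply continuous2_dtv].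
Qed.

Lemma flux_x_boundary j : (0 < Nx)%nat -> flux_x (pred Nx) j = 0.
Proof.
  intros H. unfold flux_x. replace (Nat.ltb (S (pred Nx)) Nx) with false by (symmetry; apply Nat.ltb_ge; lia).
  rewrite (RInt_ext _ (fun _ => 0)) by (intros; apply Av_dot_zero3). rewrite RInt_constR. ring.
Qed.

Lemma flux_z_boundary i : (0 < Nz)%nat -> flux_z i (pred Nz) = 0.
Proof.
  intros H. unfold flux_z. replace (Nat.ltb (S (pred Nz)) Nz) with false by (symmetry; apply Nat.ltb_ge; lia).
  rewrite (RInt_ext _ (fun _ => 0)) by (intros; apply Av_dot_zero3). rewrite RInt_constR. ring.
Qed.

Lemma energy_cells s : 0 < s ->
  energy M Nx Nz xs zs v Sh s = sumR Nx (fun i => sumR Nz (fun j => kinetic_energy i j s + strain_energy i j s)).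
Proof.
  intros Hs. unfold energy. apply sumR_ext; intros i Hi; apply sumR_ext; intros j Hj.
  assert (Hij : cell i j) by (split; auto). destruct (cell_bounds i j Hij) as [Hx Hz].
  unfold kinetic_energy, strain_energy, cellint. apply (cint_plus _ _ _ _ Hz).
  - apply continuous2_sumR; intros; apply continuous2_mult;
      apply is_poly2_continuous2 with k; now apply dtv_is_poly2.
  - apply continuous2_sumR; intros; apply continuous2_sumR; intros; apply continuous2_mult;
      now apply continuous2_Sh.
Qed.

Lemma fluxes_telescope :
  sumR Nx (fun i => sumR Nz (fun j => (flux_x i j - (if Nat.ltb 0 i then flux_x (pred i) j else 0))
                                     + (flux_z i j - (if Nat.ltb 0 j then flux_z i (pred j) else 0)))) = 0.
Proof.
  rewrite (sumR_ext Nx _ (fun i => sumR Nz (fun j => flux_x i j - (if Nat.ltb 0 i then flux_x (pred i) j else 0))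
                                 + sumR Nz (fun j => flux_z i j - (if Nat.ltb 0 j then flux_z i (pred j) else 0))))
    by (intros; apply sumR_plus).
  rewrite sumR_plus, sumR_swap.
  destruct (Nat.eq_dec Nx 0) as [->|HNx]; [rewrite !sumR_eq0 by (intros; first [reflexivity|lia]); ring|].
  destruct (Nat.eq_dec Nz 0) as [->|HNz]; [rewrite !sumR_eq0 by (intros; first [reflexivity|lia]); ring|].
  rewrite (sumR_ext Nz _ (fun _ => 0)), (sumR_ext Nx (fun i => sumR Nz _) (fun _ => 0)).
  - rewrite !sumR_eq0 by reflexivity. ring.
  - intros i Hi. rewrite (sumR_telescope Nz (fun j => flux_z i j)) by lia. apply flux_z_boundary. lia.
  - intros j Hj. rewrite (sumR_telescope Nx (fun i => flux_x i j)) by lia. apply flux_x_boundary. lia.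
Qed.

Lemma energy_is_derive_0 : is_derive (energy M Nx Nz xs zs v Sh) t 0.
Proof.
  apply (is_derive_near _ (fun s => sumR Nx (fun i => sumR Nz (fun j => kinetic_energy i j s + strain_energy i j s)))
           t (mkposreal t Ht)).
  { intros s Hs. simpl in Hs. pose proof (Rabs_def2 _ _ Hs). symmetry. apply energy_cells. lra. }
  eapply is_derive_eq.
  { apply is_derive_sumR; intros i Hi; apply is_derive_sumR; intros j Hj.
    apply is_derive_plusR; [apply is_derive_kinetic_energy|apply is_derive_strain_energy]; split; auto. }
  rewrite <- (Rmult_0_r 2), <- fluxes_telescope, <- sumR_scal_l. apply sumR_ext; intros i Hi.
  rewrite <- sumR_scal_l. apply sumR_ext; intros j Hj. apply cell_energy_rate. split; auto.
Qed.

End LDG.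

Theorem theorem2
  (k M Nx Nz : nat) (xs zs : nat -> R)
  (a : nat -> nat -> nat -> nat -> R -> R -> R)
  (v : R -> nat -> nat -> nat -> R -> R -> R)
  (Sh : R -> nat -> nat -> nat -> nat -> R -> R -> R)
  (* mesh *)
  (Hxs : forall i, (i < Nx)%nat -> xs i < xs (S i))
  (Hzs : forall j, (j < Nz)%nat -> zs j < zs (S j))
  (* A: smooth on each cell, symmetric positive definite *)
  (Hsmooth : forall i j k' l, (i < Nx)%nat -> (j < Nz)%nat ->
      (k' < M)%nat -> (l < M)%nat -> smooth2 (a i j k' l))
  (Hsym : forall i j k' l x z, (i < Nx)%nat -> (j < Nz)%nat ->
      (k' < M)%nat -> (l < M)%nat ->
      xs i <= x <= xs (S i) -> zs j <= z <= zs (S j) ->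
      a i j k' l x z = a i j l k' x z)
  (Hpd : forall i j x z (xi : nat -> R), (i < Nx)%nat -> (j < Nz)%nat ->
      xs i <= x <= xs (S i) -> zs j <= z <= zs (S j) ->
      (exists m, (m < M)%nat /\ xi m <> 0) ->
      0 < sumR M (fun k' => sumR M (fun l => xi k' * a i j k' l x z * xi l)))
  (* v_h(t) in V_h^k, with coefficients twice differentiable in t *)
  (Hv : exists c : R -> nat -> nat -> nat -> nat -> nat -> R,
      (forall t i j m x z, 0 < t -> (i < Nx)%nat -> (j < Nz)%nat -> (m < M)%nat ->
          v t i j m x z = poly2 k (c t i j m) x z) /\
      (forall t i j m p q, 0 < t ->
          ex_derive (fun s => c s i j m p q) t /\
          ex_derive (fun s => Derive (fun r => c r i j m p q) s) t))
  (* S_h(t) in (V_h^k)^2 *)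
  (HS : forall t i j m d, 0 < t -> (i < Nx)%nat -> (j < Nz)%nat ->
      (m < M)%nat -> (d < 2)%nat -> is_poly2 k (Sh t i j m d))
  (* the LDG scheme *)
  (Heq1 : forall t i j (p : nat -> nat -> nat -> R -> R -> R), 0 < t ->
      (i < Nx)%nat -> (j < Nz)%nat ->
      (forall i' j' m, (i' < Nx)%nat -> (j' < Nz)%nat -> (m < M)%nat ->
          is_poly2 k (p i' j' m)) ->
      ldg_eq1 M xs zs a v Sh t i j (p i j))
  (Heq2 : forall t i j (w : nat -> nat -> nat -> nat -> R -> R -> R), 0 < t ->
      (i < Nx)%nat -> (j < Nz)%nat ->
      (forall i' j' m d, (i' < Nx)%nat -> (j' < Nz)%nat -> (m < M)%nat ->
          (d < 2)%nat -> is_poly2 k (w i' j' m d)) ->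
      ldg_eq2 M Nx Nz xs zs a v Sh t i j (w i j)) :
  forall t, 0 < t -> is_derive (energy M Nx Nz xs zs v Sh) t 0.
Proof.
  intros t Ht. destruct Hv as [c [Hvc Hvd]].
  exact (energy_is_derive_0 k M Nx Nz xs zs a v Sh c Hxs Hzs Hsmooth Hsym Hvc Hvd HS Heq1 Heq2 t Ht).
Qed.
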